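(* Let $T$ be a complete classical theory in a countable language, no model of which is a singleton, and let $\Phi$ be a rich sequence. Then $\mathbf{G}_\Phi(T)$ is a Polish open topological groupoid, and its base $\mathbf{B}_\Phi(T)$ is homeomorphic to the Cantor set.
   Context: (Single-sorted for simplicity.) $\Phi=(\varphi_n(x_{<n},y))_n$, $y$ a single variable, is rich if every formula $\varphi(x_{<k},y)$ appears (with dummy variables) as $\varphi_n$ for some $n\ge k$. $D_{\Phi,n}(x_{<n})=\bigwedge_{k<n}\forall y[\varphi_k(x_{<k},y)\to\varphi_k(x_{\le k})]$, $D_\Phi=\bigwedge_nD_{\Phi,n}$. $\mathbf{G}_\Phi(T)$ is the set of types $\mathrm{tp}(a,b)$, in the space of types of pairs of $\mathbb{N}$-indexed sequences (logic topology; subspace topology), with $a,b$ realising $D_\Phi$ and having the same set of entries; composition $\mathrm{tp}(a,b)\mathrm{tp}(b,c)=\mathrm{tp}(a,c)$, inverse $\mathrm{tp}(b,a)$. Base $\mathbf{B}_\Phi(T)=\{\mathrm{tp}(a,a)\}$, identified with the space of types of realisations of $D_\Phi$; $s_{\mathrm{tp}(a,b)}=\mathrm{tp}(b)$, $t_{\mathrm{tp}(a,b)}=\mathrm{tp}(a)$. A topological groupoid is open if its source map is open; Polish means separable completely metrisable. *)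

From Stdlib Require Import Reals Classical FunctionalExtensionality PropExtensionality.
From Stdlib Require Fin.
Set Implicit Arguments.
Open Scope R_scope.

Record Language := {
  Fsym : Type;
  Rsym : Type;
  farity : Fsym -> nat;
  rarity : Rsym -> nat
}.

Definition countable_language (L : Language) : Prop :=
  (exists e : Fsym L -> nat, forall f g, e f = e g -> f = g) /\
  (exists e : Rsym L -> nat, forall r s, e r = e s -> r = s).

Section Syntax.
Variable L : Language.

Inductive term : Type :=
| tvar : nat -> term
| tapp : forall f : Fsym L, (Fin.t (farity L f) -> term) -> term.

Inductive formula : Type :=
| fFalse : formula
| fEq : term -> term -> formula
| fRel : forall r : Rsym L, (Fin.t (rarity L r) -> term) -> formula
| fNot : formula -> formula
| fAnd : formula -> formula -> formula
| fOr : formula -> formula -> formula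
| fImp : formula -> formula -> formula
| fEx : nat -> formula -> formula
| fAll : nat -> formula -> formula.

Fixpoint occurs_term (n : nat) (t : term) : Prop :=
  match t with
  | tvar m => m = n
  | tapp f args => exists i, occurs_term n (args i)
  end.

Fixpoint occurs_free (n : nat) (phi : formula) : Prop :=
  match phi with
  | fFalse => False
  | fEq t u => occurs_term n t \/ occurs_term n u
  | fRel r args => exists i, occurs_term n (args i)
  | fNot p => occurs_free n p
  | fAnd p q | fOr p q | fImp p q => occurs_free n p \/ occurs_free n q
  | fEx m p | fAll m p => m <> n /\ occurs_free n p
  end.

Definition sentence (phi : formula) : Prop := forall n, ~ occurs_free n phi.

Record Structure := {
  dom : Type;
  dom_inhabited : inhabited dom;
  fint : forall f : Fsym L, (Fin.t (farity L f) -> dom) -> dom;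
  rint : forall r : Rsym L, (Fin.t (rarity L r) -> dom) -> Prop
}.

Fixpoint eval (M : Structure) (env : nat -> dom M) (t : term) : dom M :=
  match t with
  | tvar n => env n
  | tapp f args => fint M f (fun i => eval M env (args i))
  end.

Definition upd (M : Structure) (env : nat -> dom M) (n : nat) (c : dom M)
  : nat -> dom M := fun m => if Nat.eqb m n then c else env m.

Fixpoint sat (M : Structure) (env : nat -> dom M) (phi : formula) : Prop :=
  match phi with
  | fFalse => False
  | fEq t u => eval M env t = eval M env u
  | fRel r args => rint M r (fun i => eval M env (args i))
  | fNot p => ~ sat M env p
  | fAnd p q => sat M env p /\ sat M env q
  | fOr p q => sat M env p \/ sat M env q
  | fImp p q => sat M env p -> sat M env q
  | fEx n p => exists c, sat M (upd M env n c) p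
  | fAll n p => forall c, sat M (upd M env n c) p
  end.

Definition theory := formula -> Prop.

Definition is_model (T : theory) (M : Structure) : Prop :=
  forall phi, T phi -> forall env, sat M env phi.

Definition complete_theory (T : theory) : Prop :=
  (exists M, is_model T M) /\
  forall phi, sentence phi ->
    (forall M, is_model T M -> forall env, sat M env phi) \/
    (forall M, is_model T M -> forall env, sat M env (fNot phi)).

Definition no_singleton_model (T : theory) : Prop :=
  forall M, is_model T M -> exists a b : dom M, a <> b.

(* Variable convention for phi_n(x_{<n}, y):  y is variable 0,  x_i is
   variable i+1.  So phi_n has free variables among 0, 1, ..., n. *)

Definition seq_formulas := nat -> formula.

Definition fv_below (k : nat) (phi : formula) : Prop :=
  forall m, occurs_free m phi -> (m <= k)%nat.

Definition is_Phi (Phi : seq_formulas) : Prop :=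
  forall n, fv_below n (Phi n).

Definition rich (Phi : seq_formulas) : Prop :=
  is_Phi Phi /\
  forall k phi, fv_below k phi -> exists n, (k <= n)%nat /\ Phi n = phi.

Definition env_xy (M : Structure) (a : nat -> dom M) (c : dom M) : nat -> dom M :=
  fun m => match m with O => c | S i => a i end.

(* a realises D_Phi = /\_n D_{Phi,n}, i.e. for every k,
   a |= forall y [phi_k(x_{<k}, y) -> phi_k(x_{<=k})]  *)
Definition realises_D (Phi : seq_formulas) (M : Structure) (a : nat -> dom M) : Prop :=
  forall k, forall c : dom M,
    sat M (env_xy M a c) (Phi k) -> sat M (env_xy M a (a k)) (Phi k).

(* Pair convention: x_i is variable 2i, y_i is variable 2i+1.         *)

Definition pair_env (M : Structure) (a b : nat -> dom M) : nat -> dom M :=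
  fun m => if Nat.even m then a (Nat.div2 m) else b (Nat.div2 m).

Definition ptype := formula -> Prop.

Definition tp2 (M : Structure) (a b : nat -> dom M) : ptype :=
  fun phi => sat M (pair_env M a b) phi.

Definition same_entries (M : Structure) (a b : nat -> dom M) : Prop :=
  (forall i, exists j, a i = b j) /\ (forall j, exists i, b j = a i).

Definition Gset (T : theory) (Phi : seq_formulas) : ptype -> Prop :=
  fun p => exists M, is_model T M /\ exists a b : nat -> dom M,
    realises_D Phi M a /\ realises_D Phi M b /\ same_entries M a b /\
    p = tp2 M a b.

Definition Bset (T : theory) (Phi : seq_formulas) : ptype -> Prop :=
  fun p => exists M, is_model T M /\ exists a : nat -> dom M,
    realises_D Phi M a /\ p = tp2 M a a.

End Syntax.

(* A space is a set [pts] of points of a carrier type together with a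
   family [opn] of "open" subsets of the carrier; only the trace V /\ pts
   of an open set V is meaningful (relative openness). *)
Record space := {
  carrier : Type;
  pts : carrier -> Prop;
  opn : (carrier -> Prop) -> Prop
}.

Definition logic_space (L : Language) (S : ptype L -> Prop) : space :=
  {| carrier := ptype L; pts := S;
     opn := fun V => forall p, S p -> V p ->
              exists phi, p phi /\ forall q, S q -> q phi -> V q |}.

Definition subspace (X : space) (A : carrier X -> Prop) : space :=
  {| carrier := carrier X; pts := fun x => pts X x /\ A x; opn := opn X |}.

Definition prod_space (X Y : space) : space :=
  {| carrier := (carrier X * carrier Y)%type;
     pts := fun z => pts X (fst z) /\ pts Y (snd z);
     opn := fun W => forall x y, pts X x -> pts Y y -> W (x, y) ->
              exists U V, opn X U /\ opn Y V /\ U x /\ V y /\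
                forall x' y', pts X x' -> pts Y y' -> U x' -> V y' -> W (x', y') |}.

Definition maps_into (X Y : space) (f : carrier X -> carrier Y) : Prop :=
  forall x, pts X x -> pts Y (f x).

Definition continuous_sp (X Y : space) (f : carrier X -> carrier Y) : Prop :=
  maps_into X Y f /\ forall V, opn Y V -> opn X (fun x => V (f x)).

Definition open_map (X Y : space) (f : carrier X -> carrier Y) : Prop :=
  forall U, opn X U -> opn Y (fun y => exists x, pts X x /\ U x /\ f x = y).

Definition homeomorphic (X Y : space) : Prop :=
  exists (f : carrier X -> carrier Y) (g : carrier Y -> carrier X),
    continuous_sp X Y f /\ continuous_sp Y X g /\
    (forall x, pts X x -> g (f x) = x) /\ (forall y, pts Y y -> f (g y) = y).

Definition polish (X : space) : Prop :=
  exists d : carrier X -> carrier X -> R,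
    (forall x y, pts X x -> pts X y -> 0 <= d x y) /\
    (forall x y, pts X x -> pts X y -> (d x y = 0 <-> x = y)) /\
    (forall x y, pts X x -> pts X y -> d x y = d y x) /\
    (forall x y z, pts X x -> pts X y -> pts X z -> d x z <= d x y + d y z) /\
    (forall V, opn X V <->
       forall x, pts X x -> V x ->
         exists eps, 0 < eps /\ forall y, pts X y -> d x y < eps -> V y) /\
    (forall u : nat -> carrier X, (forall n, pts X (u n)) ->
       (forall eps, 0 < eps -> exists N, forall m n, (N <= m)%nat -> (N <= n)%nat ->
          d (u m) (u n) < eps) ->
       exists l, pts X l /\ forall eps, 0 < eps -> exists N, forall n, (N <= n)%nat ->
          d (u n) l < eps) /\
    (exists u : nat -> carrier X, forall x, pts X x -> forall eps, 0 < eps ->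
       exists n, pts X (u n) /\ d x (u n) < eps).

Definition cantor : space :=
  {| carrier := nat -> bool; pts := fun _ => True;
     opn := fun V => forall x, V x -> exists n, forall y,
              (forall i, (i < n)%nat -> y i = x i) -> V y |}.

Definition Gspace L (T : theory L) (Phi : seq_formulas L) : space :=
  logic_space (Gset T Phi).

Definition Bspace L (T : theory L) (Phi : seq_formulas L) : space :=
  logic_space (Bset T Phi).

Definition composable L (T : theory L) (Phi : seq_formulas L)
  (s t : ptype L -> ptype L) : space :=
  subspace (prod_space (Gspace T Phi) (Gspace T Phi))
           (fun z => s (fst z) = t (snd z)).

Definition groupoid_maps_spec L (T : theory L) (Phi : seq_formulas L)
  (s t inv : ptype L -> ptype L) (mul : ptype L -> ptype L -> ptype L) : Prop :=
  (forall M, is_model T M -> forall a b c : nat -> dom M,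
     realises_D Phi M a -> realises_D Phi M b -> realises_D Phi M c ->
     same_entries M a b -> same_entries M b c ->
     s (tp2 M a b) = tp2 M b b /\ t (tp2 M a b) = tp2 M a a /\
     inv (tp2 M a b) = tp2 M b a /\
     mul (tp2 M a b) (tp2 M b c) = tp2 M a c) /\
  (forall p q, Gset T Phi p -> Gset T Phi q -> s p = t q ->
     exists M, is_model T M /\ exists a b c : nat -> dom M,
       realises_D Phi M a /\ realises_D Phi M b /\ realises_D Phi M c /\
       same_entries M a b /\ same_entries M b c /\
       p = tp2 M a b /\ q = tp2 M b c).

Definition groupoid_axioms L (Gs Bs : ptype L -> Prop)
  (s t inv : ptype L -> ptype L) (mul : ptype L -> ptype L -> ptype L) : Prop :=
  (forall e, Bs e -> Gs e) /\
  (forall e, Bs e -> s e = e /\ t e = e) /\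
  (forall g, Gs g -> Bs (s g) /\ Bs (t g) /\ Gs (inv g)) /\
  (forall g h, Gs g -> Gs h -> s g = t h ->
     Gs (mul g h) /\ s (mul g h) = s h /\ t (mul g h) = t g) /\
  (forall f g h, Gs f -> Gs g -> Gs h -> s f = t g -> s g = t h ->
     mul (mul f g) h = mul f (mul g h)) /\
  (forall g, Gs g -> mul (t g) g = g /\ mul g (s g) = g) /\
  (forall g, Gs g -> s (inv g) = t g /\ t (inv g) = s g /\
     mul g (inv g) = t g /\ mul (inv g) g = s g).

Definition polish_open_topological_groupoid L (T : theory L) (Phi : seq_formulas L) : Prop :=
  exists (s t inv : ptype L -> ptype L) (mul : ptype L -> ptype L -> ptype L),
    groupoid_maps_spec T Phi s t inv mul /\
    groupoid_axioms (Gset T Phi) (Bset T Phi) s t inv mul /\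
    continuous_sp (composable T Phi s t) (Gspace T Phi) (fun z => mul (fst z) (snd z)) /\
    continuous_sp (Gspace T Phi) (Gspace T Phi) inv /\
    continuous_sp (Gspace T Phi) (Bspace T Phi) s /\
    continuous_sp (Gspace T Phi) (Bspace T Phi) t /\
    (* open: the source map is open *)
    open_map (Gspace T Phi) (Bspace T Phi) s /\
    polish (Gspace T Phi).

(* The type spaces are handled through an enumeration [E] of the formulas, which exists
   since the language is countable.  Richness of [Phi] makes every realisation of [D_Phi]
   existentially closed, with witnesses at positions depending only on the formula; hence
   an initial segment satisfying the first conditions of [D_Phi] extends to a realisation
   with any prescribed set of entries.  This makes the source map open, and it replaces
   compactness: if the types of realisations converge formula by formula, the indices
   modulo eventual equality form a model of [T] realising the limit type.  So [G] is
   complete for the ultrametric [2^-n], [n] the first index at which two types differ on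
   [E n] or on where the [n]-th entry of one sequence first occurs in the other; and [B]
   is compact.  Models having two elements and richness leaving positions free, [B] has
   no isolated points, so splitting cells along [E] identifies it with Cantor space. *)

From Stdlib Require Import Reals Classical ClassicalEpsilon FunctionalExtensionality
  PropExtensionality ProofIrrelevance Arith Wf_nat Lia Lra List Cantor.
From Stdlib Require Fin.

Set Implicit Arguments.
Open Scope nat_scope.

Definition eventually (P : nat -> Prop) : Prop := exists K, forall k, K <= k -> P k.

Lemma eventually_mono (P Q : nat -> Prop) :
  (forall k, P k -> Q k) -> eventually P -> eventually Q.
Proof. intros H [K HK]; exists K; auto. Qed.

Lemma eventually_and (P Q : nat -> Prop) :
  eventually P -> eventually Q -> eventually (fun k => P k /\ Q k).
Proof. intros [K1 H1] [K2 H2]; exists (K1 + K2); intros k Hk; split; [apply H1 | apply H2]; lia. Qed.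

Lemma always_eventually (P : nat -> Prop) : (forall k, P k) -> eventually P.
Proof. intros H; exists 0; auto. Qed.

Lemma eventually_False : ~ eventually (fun _ => False).
Proof. intros [K HK]; exact (HK K (le_n K)). Qed.

Lemma eventually_not (P : nat -> Prop) : eventually (fun k => ~ P k) -> ~ eventually P.
Proof.
  intros H1 H2; apply eventually_False.
  generalize (eventually_and H1 H2); apply eventually_mono; tauto.
Qed.

Lemma eventually_forall_lt (N : nat) (P : nat -> nat -> Prop) :
  (forall m, m < N -> eventually (P m)) -> eventually (fun k => forall m, m < N -> P m k).
Proof.
  induction N as [|N IH]; intros H; [apply always_eventually; intros; lia|].
  destruct (eventually_and (IH (fun m Hm => H m ltac:(lia))) (H N ltac:(lia))) as [K HK].
  exists K; intros k Hk m Hm; destruct (HK k Hk) as [H1 H2].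
  destruct (Nat.eq_dec m N); [subst; auto | apply H1; lia].
Qed.

Lemma eventually_forall_fin (r : nat) (P : Fin.t r -> nat -> Prop) :
  (forall x, eventually (P x)) -> eventually (fun k => forall x, P x k).
Proof.
  induction r as [|r IH]; intros H.
  - apply always_eventually; intros k x; apply (Fin.case0 (fun x => P x k) x).
  - destruct (eventually_and (IH _ (fun x => H (Fin.FS x))) (H Fin.F1)) as [K HK].
    exists K; intros k Hk x; destruct (HK k Hk) as [H1 H2].
    apply (Fin.caseS' x (fun x => P x k)); auto.
Qed.

Definition least (P : nat -> Prop) : nat :=
  epsilon (inhabits 0) (fun j => P j /\ forall j', P j' -> j <= j').

Lemma least_spec (P : nat -> Prop) :
  (exists j, P j) -> P (least P) /\ forall j', P j' -> least P <= j'.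
Proof.
  intros H; unfold least; apply epsilon_spec.
  destruct (dec_inh_nat_subset_has_unique_least_element P (fun n => classic (P n)) H)
    as [j [Hj _]]; eauto.
Qed.

Lemma least_unique (P : nat -> Prop) j : P j -> (forall j', P j' -> j <= j') -> least P = j.
Proof.
  intros Hj Hmin; destruct (least_spec P (ex_intro _ j Hj)) as [H1 H2].
  specialize (H2 j Hj); specialize (Hmin _ H1); lia.
Qed.

(** * Syntax *)

Section Syntax.
Variable L : Language.

Fixpoint fin_max (r : nat) : (Fin.t r -> nat) -> nat :=
  match r with
  | O => fun _ => O
  | S r' => fun g => Nat.max (g Fin.F1) (fin_max (fun x => g (Fin.FS x)))
  end.

Lemma fin_max_ge r (g : Fin.t r -> nat) x : g x <= fin_max g.
Proof.
  induction r as [|r IH]; [apply (Fin.case0 (fun x => g x <= _) x)|].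
  apply (Fin.caseS' x (fun x => g x <= fin_max g)); simpl; [lia|].
  intros y; specialize (IH (fun x => g (Fin.FS x)) y); simpl in IH; lia.
Qed.

Fixpoint term_bound (t : term L) : nat :=
  match t with
  | tvar _ n => S n
  | tapp f args => fin_max (fun x => term_bound (args x))
  end.

Fixpoint formula_bound (p : formula L) : nat :=
  match p with
  | fFalse _ => O
  | fEq t u => Nat.max (term_bound t) (term_bound u)
  | fRel r args => fin_max (fun x => term_bound (args x))
  | fNot p => formula_bound p
  | fAnd p q | fOr p q | fImp p q => Nat.max (formula_bound p) (formula_bound q)
  | fEx n p | fAll n p => Nat.max (S n) (formula_bound p)
  end.

Lemma occurs_term_lt_bound n t : occurs_term n t -> n < term_bound t.
Proof.
  induction t as [m|f args IH]; simpl; [lia|].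
  intros [i Hi]; specialize (IH i Hi).
  pose proof (fin_max_ge (fun x => term_bound (args x)) i); simpl in *; lia.
Qed.

Lemma occurs_free_lt_bound n p : occurs_free n p -> n < formula_bound p.
Proof.
  induction p; cbn [occurs_free formula_bound]; try tauto;
    try (intros [H|H]; [apply IHp1 in H | apply IHp2 in H]; lia);
    try (intros [_ H]; apply IHp in H; lia).
  - intros [H|H]; apply occurs_term_lt_bound in H; lia.
  - intros [i Hi]; apply occurs_term_lt_bound in Hi.
    pose proof (fin_max_ge (fun x => term_bound (t x)) i); simpl in *; lia.
Qed.

Lemma eval_ext_occurs (M : Structure L) (e e' : nat -> dom M) t :
  (forall n, occurs_term n t -> e n = e' n) -> eval M e t = eval M e' t.
Proof.
  induction t as [m|f args IH]; simpl; intros H; [auto|].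
  f_equal; apply functional_extensionality; intros x; apply IH.
  intros n Hn; apply H; exists x; auto.
Qed.

Lemma sat_ext_occurs (M : Structure L) p : forall (e e' : nat -> dom M),
  (forall n, occurs_free n p -> e n = e' n) -> (sat M e p <-> sat M e' p).
Proof.
  assert (Hupd : forall (e e' : nat -> dom M) n c (q : formula L),
    (forall m, occurs_free m q -> m <> n -> e m = e' m) ->
    forall m, occurs_free m q -> upd M e n c m = upd M e' n c m).
  { intros e e' n c q H m Hm; unfold upd; destruct (Nat.eqb_spec m n); auto. }
  induction p; simpl; intros e e' H; try tauto.
  - rewrite (eval_ext_occurs M e e' t), (eval_ext_occurs M e e' t0); [tauto | |];
      intros; apply H; auto.
  - replace (fun i => eval M e (t i)) with (fun i => eval M e' (t i)); [tauto|].
    apply functional_extensionality; intros i; symmetry; apply eval_ext_occurs.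
    intros; apply H; exists i; auto.
  - rewrite (IHp e e' H); tauto.
  - rewrite (IHp1 e e'), (IHp2 e e'); [tauto | |]; intros; apply H; auto.
  - rewrite (IHp1 e e'), (IHp2 e e'); [tauto | |]; intros; apply H; auto.
  - rewrite (IHp1 e e'), (IHp2 e e'); [tauto | |]; intros; apply H; auto.
  - split; intros [c Hc]; exists c; revert Hc; apply IHp, Hupd;
      intros m Hm Hmn; first [apply H; auto | symmetry; apply H; auto].
  - split; intros Hc c; specialize (Hc c); revert Hc; apply IHp, Hupd;
      intros m Hm Hmn; first [apply H; auto | symmetry; apply H; auto].
Qed.

Lemma sat_ext (M : Structure L) p (e e' : nat -> dom M) :
  (forall n, e n = e' n) -> (sat M e p <-> sat M e' p).
Proof. intros H; apply sat_ext_occurs; auto. Qed.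

Fixpoint rename_term (rho : nat -> nat) (t : term L) : term L :=
  match t with
  | tvar _ n => tvar L (rho n)
  | tapp f args => tapp f (fun x => rename_term rho (args x))
  end.

Fixpoint max_below (rho : nat -> nat) (N : nat) : nat :=
  match N with O => O | S N' => Nat.max (rho N') (max_below rho N') end.

Lemma max_below_ge rho N m : m < N -> rho m <= max_below rho N.
Proof.
  induction N; simpl; intros; [lia|].
  destruct (Nat.eq_dec m N); [subst; lia | specialize (IHN ltac:(lia)); lia].
Qed.

Definition upd_nat (rho : nat -> nat) (n v : nat) : nat -> nat :=
  fun m => if Nat.eqb m n then v else rho m.

(* A bound variable is renamed to a variable above the image of all free ones,
   so that no capture can occur. *)
Fixpoint rename (rho : nat -> nat) (p : formula L) : formula L :=
  match p with
  | fFalse _ => fFalse L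
  | fEq t u => fEq (rename_term rho t) (rename_term rho u)
  | fRel r args => fRel r (fun x => rename_term rho (args x))
  | fNot p => fNot (rename rho p)
  | fAnd p q => fAnd (rename rho p) (rename rho q)
  | fOr p q => fOr (rename rho p) (rename rho q)
  | fImp p q => fImp (rename rho p) (rename rho q)
  | fEx n p =>
      let v := S (max_below rho (formula_bound p)) in fEx v (rename (upd_nat rho n v) p)
  | fAll n p =>
      let v := S (max_below rho (formula_bound p)) in fAll v (rename (upd_nat rho n v) p)
  end.

Lemma eval_rename_term (M : Structure L) (e : nat -> dom M) rho t :
  eval M e (rename_term rho t) = eval M (fun m => e (rho m)) t.
Proof.
  induction t as [m|f args IH]; simpl; auto.
  f_equal; apply functional_extensionality; intros x; apply IH.
Qed.

Lemma upd_rename_fresh (M : Structure L) (e : nat -> dom M) rho n p c :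
  let v := S (max_below rho (formula_bound p)) in
  forall m, occurs_free m p ->
    upd M e v c (upd_nat rho n v m) = upd M (fun m => e (rho m)) n c m.
Proof.
  intros v m Hm; unfold upd, upd_nat.
  destruct (Nat.eqb m n); [rewrite Nat.eqb_refl; auto|].
  pose proof (occurs_free_lt_bound _ _ Hm) as Hlt.
  pose proof (max_below_ge rho Hlt).
  destruct (Nat.eqb_spec (rho m) v); [unfold v in *; lia | auto].
Qed.

Lemma sat_rename (M : Structure L) p : forall rho (e : nat -> dom M),
  sat M e (rename rho p) <-> sat M (fun m => e (rho m)) p.
Proof.
  induction p; simpl; intros rho e; try tauto.
  - rewrite !eval_rename_term; tauto.
  - replace (fun i => eval M e (rename_term rho (t i)))
      with (fun i => eval M (fun m => e (rho m)) (t i)); [tauto|].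
    apply functional_extensionality; intros; rewrite eval_rename_term; auto.
  - rewrite IHp; tauto.
  - rewrite IHp1, IHp2; tauto.
  - rewrite IHp1, IHp2; tauto.
  - rewrite IHp1, IHp2; tauto.
  - split; intros [c Hc]; exists c; [rewrite IHp in Hc | rewrite IHp]; revert Hc;
      apply sat_ext_occurs; intros m Hm; rewrite upd_rename_fresh; auto.
  - split; intros Hc c; specialize (Hc c); [rewrite IHp in Hc | rewrite IHp]; revert Hc;
      apply sat_ext_occurs; intros m Hm; rewrite upd_rename_fresh; auto.
Qed.

Lemma occurs_rename_term m rho t :
  occurs_term m (rename_term rho t) -> exists m', occurs_term m' t /\ rho m' = m.
Proof.
  induction t as [k|f args IH]; simpl; [eauto|].
  intros [i Hi]; destruct (IH i Hi) as [m' [H1 H2]]; exists m'; split; eauto.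
Qed.

Lemma occurs_free_rename p : forall m rho,
  occurs_free m (rename rho p) -> exists m', occurs_free m' p /\ rho m' = m.
Proof.
  induction p; simpl; intros m rho H; try tauto;
    try (destruct H as [H|H]; [apply IHp1 in H | apply IHp2 in H];
         destruct H as [m' [H1 H2]]; exists m'; auto; fail).
  - destruct H as [H|H]; apply occurs_rename_term in H; destruct H as [m' [H1 H2]]; eauto.
  - destruct H as [i H]; apply occurs_rename_term in H; destruct H as [m' [H1 H2]].
    exists m'; split; eauto.
  - apply IHp; auto.
  - destruct H as [Hne H]; apply IHp in H; destruct H as [m' [H1 H2]].
    unfold upd_nat in H2; destruct (Nat.eqb_spec m' n); [congruence | eauto].
  - destruct H as [Hne H]; apply IHp in H; destruct H as [m' [H1 H2]].
    unfold upd_nat in H2; destruct (Nat.eqb_spec m' n); [congruence | eauto].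
Qed.

Fixpoint big_and (n : nat) (f : nat -> formula L) : formula L :=
  match n with O => fNot (fFalse L) | S n' => fAnd (big_and n' f) (f n') end.

Lemma sat_big_and (M : Structure L) e n f :
  sat M e (big_and n f) <-> forall i, i < n -> sat M e (f i).
Proof.
  induction n as [|n IH]; simpl; [split; auto; intros; lia|].
  rewrite IH; split; [|auto].
  intros [H1 H2] i Hi; destruct (Nat.eq_dec i n); [subst; auto | apply H1; lia].
Qed.

End Syntax.

Lemma to_nat_inj (x y x' y' : nat) :
  Cantor.to_nat (x, y) = Cantor.to_nat (x', y') -> x = x' /\ y = y'.
Proof.
  intros H; apply (f_equal Cantor.of_nat) in H; rewrite !Cantor.cancel_of_to in H.
  injection H; auto.
Qed.

Section Encoding.
Variable L : Language.
Variable code_f : Fsym L -> nat.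
Hypothesis code_f_inj : forall f g, code_f f = code_f g -> f = g.
Variable code_r : Rsym L -> nat.
Hypothesis code_r_inj : forall r s, code_r r = code_r s -> r = s.

Fixpoint encode_fin (r : nat) : (Fin.t r -> nat) -> nat :=
  match r with
  | O => fun _ => 0
  | S r' => fun g => Cantor.to_nat (g Fin.F1, encode_fin (fun x => g (Fin.FS x)))
  end.

Lemma encode_fin_inj r (g h : Fin.t r -> nat) :
  encode_fin g = encode_fin h -> forall x, g x = h x.
Proof.
  induction r as [|r IH]; intros H x; [apply (Fin.case0 (fun x => g x = h x) x)|].
  apply to_nat_inj in H; destruct H as [H1 H2].
  apply (Fin.caseS' x (fun x => g x = h x)); auto.
  apply (IH _ _ H2).
Qed.

Fixpoint encode_term (t : term L) : nat :=
  match t with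
  | tvar _ n => Cantor.to_nat (0, n)
  | tapp f args => Cantor.to_nat (S (code_f f), encode_fin (fun x => encode_term (args x)))
  end.

Lemma encode_term_inj t u : encode_term t = encode_term u -> t = u.
Proof.
  revert u; induction t as [n|f args IH]; intros [m|g args'] H; cbn [encode_term] in H;
    apply to_nat_inj in H; destruct H as [H1 H2]; try discriminate.
  - subst; auto.
  - injection H1 as H1; apply code_f_inj in H1; subst g.
    f_equal; apply functional_extensionality; intros x.
    apply IH, (encode_fin_inj _ _ H2).
Qed.

Fixpoint encode_formula (p : formula L) : nat :=
  match p with
  | fFalse _ => Cantor.to_nat (0, 0)
  | fEq t u => Cantor.to_nat (1, Cantor.to_nat (encode_term t, encode_term u))
  | fRel r args =>
      Cantor.to_nat (2, Cantor.to_nat (code_r r, encode_fin (fun x => encode_term (args x))))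
  | fNot p => Cantor.to_nat (3, encode_formula p)
  | fAnd p q => Cantor.to_nat (4, Cantor.to_nat (encode_formula p, encode_formula q))
  | fOr p q => Cantor.to_nat (5, Cantor.to_nat (encode_formula p, encode_formula q))
  | fImp p q => Cantor.to_nat (6, Cantor.to_nat (encode_formula p, encode_formula q))
  | fEx n p => Cantor.to_nat (7, Cantor.to_nat (n, encode_formula p))
  | fAll n p => Cantor.to_nat (8, Cantor.to_nat (n, encode_formula p))
  end.

Lemma encode_formula_inj p q : encode_formula p = encode_formula q -> p = q.
Proof.
  revert q; induction p; intros [] H; cbn [encode_formula] in H;
    apply to_nat_inj in H; destruct H as [Htag H]; try discriminate Htag;
    try (apply to_nat_inj in H; destruct H as [H1 H2]); f_equal; auto.
  - apply encode_term_inj; auto.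
  - apply encode_term_inj; auto.
  - apply code_r_inj in H1; subst r0.
    f_equal; apply functional_extensionality; intros x.
    apply encode_term_inj, (encode_fin_inj _ _ H2).
Qed.

End Encoding.

Lemma formula_enumeration (L : Language) :
  countable_language L -> exists E : nat -> formula L, forall p, exists n, E n = p.
Proof.
  intros [[cf Hf] [cr Hr]].
  exists (fun n => epsilon (inhabits (fFalse L)) (fun p => encode_formula cf cr p = n)).
  intros p; exists (encode_formula cf cr p).
  apply (encode_formula_inj cf Hf cr Hr), (epsilon_spec (inhabits (fFalse L))
    (fun q => encode_formula cf cr q = encode_formula cf cr p)); eauto.
Qed.

(** * Types of pairs of sequences *)

Lemma ptype_ext (L : Language) (p q : ptype L) : (forall phi, p phi <-> q phi) -> p = q.
Proof. intros H; apply functional_extensionality; intros; apply propositional_extensionality; auto. Qed.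

Section PairTypes.
Variable L : Language.

Definition xvar (i : nat) : nat := 2 * i.
Definition yvar (j : nat) : nat := 2 * j + 1.

Lemma var_ind (P : nat -> Prop) : (forall i, P (xvar i)) -> (forall j, P (yvar j)) -> forall m, P m.
Proof.
  intros Hx Hy m; destruct (Nat.Even_or_Odd m) as [[i ->] | [i ->]]; [apply Hx | apply Hy].
Qed.

Lemma pair_env_x (M : Structure L) a b i : pair_env M a b (xvar i) = a i.
Proof. unfold pair_env, xvar; rewrite Nat.even_even, Nat.div2_double; auto. Qed.

Lemma pair_env_y (M : Structure L) a b j : pair_env M a b (yvar j) = b j.
Proof. unfold pair_env, yvar; rewrite Nat.even_odd, Nat.div2_odd'; auto. Qed.

Lemma pair_env_xy (M : Structure L) a b :
  (fun i => pair_env M a b (xvar i)) = a /\ (fun j => pair_env M a b (yvar j)) = b.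
Proof.
  split; apply functional_extensionality; intros; [apply pair_env_x | apply pair_env_y].
Qed.

Definition var_pair (f g : nat -> nat) (m : nat) : nat :=
  if Nat.even m then f (Nat.div2 m) else g (Nat.div2 m).

Definition type_rename (rho : nat -> nat) (p : ptype L) : ptype L :=
  fun phi => p (rename rho phi).

Lemma type_rename_tp2 (M : Structure L) a b f g :
  type_rename (var_pair f g) (tp2 M a b)
  = tp2 M (fun i => pair_env M a b (f i)) (fun j => pair_env M a b (g j)).
Proof.
  apply ptype_ext; intros phi; unfold type_rename, tp2; rewrite sat_rename.
  apply sat_ext; intros m; unfold var_pair; symmetry; unfold pair_env at 1.
  destruct (Nat.even m); auto.
Qed.

Definition type_target (p : ptype L) : ptype L := type_rename (var_pair xvar xvar) p.
Definition type_source (p : ptype L) : ptype L := type_rename (var_pair yvar yvar) p.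
Definition type_inverse (p : ptype L) : ptype L := type_rename (var_pair yvar xvar) p.

Lemma type_target_tp2 (M : Structure L) a b : type_target (tp2 M a b) = tp2 M a a.
Proof. unfold type_target; rewrite type_rename_tp2, (proj1 (pair_env_xy M a b)); auto. Qed.

Lemma type_source_tp2 (M : Structure L) a b : type_source (tp2 M a b) = tp2 M b b.
Proof. unfold type_source; rewrite type_rename_tp2, (proj2 (pair_env_xy M a b)); auto. Qed.

Lemma type_inverse_tp2 (M : Structure L) a b : type_inverse (tp2 M a b) = tp2 M b a.
Proof.
  unfold type_inverse; rewrite type_rename_tp2.
  destruct (pair_env_xy M a b) as [-> ->]; auto.
Qed.

Definition entry_eq (i j : nat) : formula L := fEq (tvar L (xvar i)) (tvar L (yvar j)).

Lemma tp2_entry_eq (M : Structure L) a b i j : tp2 M a b (entry_eq i j) <-> a i = b j.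
Proof. unfold tp2, entry_eq; cbn [sat eval]; rewrite pair_env_x, pair_env_y; tauto. Qed.

Definition first_y (p : ptype L) (i : nat) : nat := least (fun j => p (entry_eq i j)).
Definition first_x (p : ptype L) (j : nat) : nat := least (fun i => p (entry_eq i j)).

Lemma first_y_tp2 (M : Structure L) a b i :
  (exists j, a i = b j) -> a i = b (first_y (tp2 M a b) i).
Proof.
  intros [j Hj]; apply tp2_entry_eq, (least_spec (fun j => tp2 M a b (entry_eq i j))).
  exists j; apply tp2_entry_eq; auto.
Qed.

Lemma first_x_tp2 (M : Structure L) a b j :
  (exists i, a i = b j) -> a (first_x (tp2 M a b) j) = b j.
Proof.
  intros [i Hi]; apply tp2_entry_eq, (least_spec (fun i => tp2 M a b (entry_eq i j))).
  exists i; apply tp2_entry_eq; auto.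
Qed.

(* For [p = tp(a,b)] and [q = tp(b,c)], both [a] and [c] are read off inside [b]. *)
Definition compose_renaming (p q : ptype L) : nat -> nat :=
  var_pair (fun i => yvar (first_y p i)) (fun j => yvar (first_x q j)).

Definition type_compose (p q : ptype L) : ptype L := type_rename (compose_renaming p q) p.

Lemma type_compose_tp2 (M : Structure L) a b c :
  (forall i, exists j, a i = b j) -> (forall j, exists i, b i = c j) ->
  type_compose (tp2 M a b) (tp2 M b c) = tp2 M a c.
Proof.
  intros Hab Hbc; unfold type_compose, compose_renaming; rewrite type_rename_tp2; f_equal;
    apply functional_extensionality; intros i; rewrite pair_env_y.
  - symmetry; apply first_y_tp2; auto.
  - apply first_x_tp2; auto.
Qed.

Lemma tp2_ext_prefix (M : Structure L) a a' b b' phi :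
  (forall i, i < formula_bound phi -> a i = a' i /\ b i = b' i) ->
  (tp2 M a b phi <-> tp2 M a' b' phi).
Proof.
  intros H; unfold tp2; apply sat_ext_occurs; intros m Hm; apply occurs_free_lt_bound in Hm.
  pose proof (Nat.le_div2_diag_l m); unfold pair_env; destruct (Nat.even m); apply H; lia.
Qed.

Definition realised (p : ptype L) : Prop := exists (M : Structure L) a b, p = tp2 M a b.

Lemma realised_and p x y : realised p -> (p (fAnd x y) <-> p x /\ p y).
Proof. intros [M [a [b ->]]]; reflexivity. Qed.

Lemma realised_not p x : realised p -> (p (fNot x) <-> ~ p x).
Proof. intros [M [a [b ->]]]; reflexivity. Qed.

Lemma realised_true p : realised p -> p (fNot (fFalse L)).
Proof. intros [M [a [b ->]]]; unfold tp2; simpl; auto. Qed.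

Lemma realised_big_and p n f : realised p -> (p (big_and n f) <-> forall i, i < n -> p (f i)).
Proof. intros [M [a [b ->]]]; apply sat_big_and. Qed.

Lemma same_entries_refl (M : Structure L) a : same_entries M a a.
Proof. split; intros i; exists i; auto. Qed.

Lemma same_entries_sym (M : Structure L) a b : same_entries M a b -> same_entries M b a.
Proof. intros [H1 H2]; split; auto. Qed.

Lemma same_entries_trans (M : Structure L) a b c :
  same_entries M a b -> same_entries M b c -> same_entries M a c.
Proof.
  intros [H1 H2] [H3 H4]; split.
  - intros i; destruct (H1 i) as [j Hj]; destruct (H3 j) as [k Hk]; exists k; congruence.
  - intros i; destruct (H4 i) as [j Hj]; destruct (H2 j) as [k Hk]; exists k; congruence.
Qed.

Section Realisations.
Variable Phi : seq_formulas L.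

Definition D_step (M : Structure L) (a : nat -> dom M) (k : nat) : Prop :=
  forall c, sat M (env_xy M a c) (Phi k) -> sat M (env_xy M a (a k)) (Phi k).

(* The conjunct [forall y, phi_k(x_{<k}, y) -> phi_k(x_{<=k})] of [D_Phi], with [x_i] the
   variable [v i]. *)
Definition D_formula (v : nat -> nat) (k : nat) : formula L :=
  rename (fun m => match m with O => v k | S i => v i end) (fImp (fEx 0 (Phi k)) (Phi k)).

Lemma sat_D_formula (M : Structure L) e v k :
  sat M e (D_formula v k) <-> D_step M (fun i => e (v i)) k.
Proof.
  unfold D_formula, D_step; rewrite sat_rename; cbn [sat].
  rewrite (sat_ext _ _ _ (env_xy M (fun i => e (v i)) (e (v k)))) by (intros []; auto).
  split.
  - intros H c Hc; apply H; exists c; revert Hc; apply sat_ext; intros []; auto.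
  - intros H [c Hc]; apply (H c); revert Hc; apply sat_ext; intros []; auto.
Qed.

Lemma tp2_D_formula_x (M : Structure L) a b k : tp2 M a b (D_formula xvar k) <-> D_step M a k.
Proof. unfold tp2; rewrite sat_D_formula, (proj1 (pair_env_xy M a b)); tauto. Qed.

Lemma tp2_D_formula_y (M : Structure L) a b k : tp2 M a b (D_formula yvar k) <-> D_step M b k.
Proof. unfold tp2; rewrite sat_D_formula, (proj2 (pair_env_xy M a b)); tauto. Qed.

Variable T : theory L.

Definition model_type (p : ptype L) : Prop :=
  exists M, is_model T M /\ exists a b, p = tp2 M a b.

Lemma Gset_iff p :
  Gset T Phi p <-> model_type p /\
    (forall k, p (D_formula xvar k)) /\ (forall k, p (D_formula yvar k)) /\
    (forall i, exists j, p (entry_eq i j)) /\ (forall j, exists i, p (entry_eq i j)).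
Proof.
  split.
  - intros [M [HM [a [b [Ha [Hb [[H1 H2] ->]]]]]]].
    split; [exists M; split; eauto|].
    setoid_rewrite tp2_D_formula_x; setoid_rewrite tp2_D_formula_y;
      setoid_rewrite tp2_entry_eq; split; auto; split; auto; split; auto.
    intros j; destruct (H2 j) as [i Hi]; eauto.
  - intros [[M [HM [a [b ->]]]] [Ha [Hb [H1 H2]]]].
    setoid_rewrite tp2_D_formula_x in Ha; setoid_rewrite tp2_D_formula_y in Hb;
      setoid_rewrite tp2_entry_eq in H1; setoid_rewrite tp2_entry_eq in H2.
    exists M; split; auto; exists a, b; repeat split; auto.
    intros j; destruct (H2 j) as [i Hi]; eauto.
Qed.

Lemma Bset_iff p :
  Bset T Phi p <-> model_type p /\ (forall k, p (D_formula xvar k)) /\ (forall i, p (entry_eq i i)).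
Proof.
  split.
  - intros [M [HM [a [Ha ->]]]]; split; [exists M; split; eauto|].
    setoid_rewrite tp2_D_formula_x; setoid_rewrite tp2_entry_eq; auto.
  - intros [[M [HM [a [b ->]]]] [Ha Hab]].
    setoid_rewrite tp2_D_formula_x in Ha; setoid_rewrite tp2_entry_eq in Hab.
    replace b with a by (apply functional_extensionality; auto).
    exists M; split; auto; exists a; auto.
Qed.

Lemma Gset_tp2 (M : Structure L) a b : is_model T M -> realises_D Phi M a ->
  realises_D Phi M b -> same_entries M a b -> Gset T Phi (tp2 M a b).
Proof. intros; exists M; split; auto; exists a, b; auto. Qed.

Lemma Bset_Gset p : Bset T Phi p -> Gset T Phi p.
Proof. intros [M [HM [a [Ha ->]]]]; apply Gset_tp2; auto using same_entries_refl. Qed.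

Lemma Gset_realised p : Gset T Phi p -> realised p.
Proof. intros [M [_ [a [b [_ [_ [_ ->]]]]]]]; exists M, a, b; auto. Qed.

Lemma Bset_realised p : Bset T Phi p -> realised p.
Proof. intros Hp; apply Gset_realised, Bset_Gset; auto. Qed.

Lemma Gset_source p : Gset T Phi p -> Bset T Phi (type_source p).
Proof. intros [M [HM [a [b [Ha [Hb [_ ->]]]]]]]; rewrite type_source_tp2; exists M; eauto. Qed.

Lemma Gset_target p : Gset T Phi p -> Bset T Phi (type_target p).
Proof. intros [M [HM [a [b [Ha [Hb [_ ->]]]]]]]; rewrite type_target_tp2; exists M; eauto. Qed.

Lemma Gset_inverse p : Gset T Phi p -> Gset T Phi (type_inverse p).
Proof.
  intros [M [HM [a [b [Ha [Hb [Hab ->]]]]]]]; rewrite type_inverse_tp2.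
  apply Gset_tp2; auto using same_entries_sym.
Qed.

Lemma first_y_entry p i : Gset T Phi p -> p (entry_eq i (first_y p i)).
Proof. intros Hp; apply Gset_iff in Hp; apply (least_spec (fun j => p (entry_eq i j))), Hp. Qed.

Lemma first_x_entry p j : Gset T Phi p -> p (entry_eq (first_x p j) j).
Proof. intros Hp; apply Gset_iff in Hp; apply (least_spec (fun i => p (entry_eq i j))), Hp. Qed.

(* [c] is obtained by reading the [y]'s of [p] off its [x]'s. *)
Lemma Gset_from_target p (M : Structure L) b :
  Gset T Phi p -> realises_D Phi M b -> type_target p = tp2 M b b ->
  exists c, p = tp2 M b c /\ realises_D Phi M c /\ same_entries M b c.
Proof.
  intros Hp Hb Ht.
  set (rho := var_pair xvar (fun j => xvar (first_x p j))).
  assert (Ep : p = type_rename rho (type_target p)).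
  { destruct Hp as [M' [_ [x [y [_ [_ [[_ Hxy] ->]]]]]]].
    rewrite type_target_tp2; unfold rho; rewrite type_rename_tp2.
    destruct (pair_env_xy M' x x) as [-> _]; f_equal.
    apply functional_extensionality; intros j; rewrite pair_env_x.
    symmetry; apply first_x_tp2; destruct (Hxy j) as [i Hi]; eauto. }
  exists (fun j => b (first_x p j)).
  assert (Ec : p = tp2 M b (fun j => b (first_x p j))).
  { rewrite Ep at 1; rewrite Ht; unfold rho; rewrite type_rename_tp2.
    destruct (pair_env_xy M b b) as [-> _]; f_equal.
    apply functional_extensionality; intros j; apply pair_env_x. }
  apply Gset_iff in Hp; destruct Hp as [_ [_ [Hy [H1 H2]]]]; rewrite Ec in Hy, H1, H2.
  split; auto; split; [intros k; exact (proj1 (tp2_D_formula_y M b _ k) (Hy k))|].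
  split; [intros i; destruct (H1 i) as [j Hj] | intros j; destruct (H2 j) as [i Hi]];
    rewrite tp2_entry_eq in *; eauto.
Qed.

Lemma composable_realised p q :
  Gset T Phi p -> Gset T Phi q -> type_source p = type_target q ->
  exists M, is_model T M /\ exists a b c, realises_D Phi M a /\ realises_D Phi M b /\
    realises_D Phi M c /\ same_entries M a b /\ same_entries M b c /\
    p = tp2 M a b /\ q = tp2 M b c.
Proof.
  intros Hp Hq Hpq.
  destruct Hp as [M [HM [a [b [Ha [Hb [Hab ->]]]]]]]; rewrite type_source_tp2 in Hpq.
  destruct (Gset_from_target Hq Hb (eq_sym Hpq)) as [c [-> [Hc Hbc]]].
  exists M; split; auto; exists a, b, c; auto 10.
Qed.

End Realisations.
End PairTypes.

Arguments type_target {L} p.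
Arguments type_source {L} p.
Arguments type_inverse {L} p.

(** * Realisations of [D_Phi] *)

Section Rich.
Variable L : Language.
Variable Phi : seq_formulas L.
Hypothesis HPhi : rich Phi.

Lemma sat_Phi_ext_prefix (M : Structure L) k (f g : nat -> dom M) c :
  (forall i, i < k -> f i = g i) ->
  (sat M (env_xy M f c) (Phi k) <-> sat M (env_xy M g c) (Phi k)).
Proof.
  intros H; apply sat_ext_occurs; intros [|m] Hm; simpl; auto.
  apply H; apply (proj1 HPhi k) in Hm; lia.
Qed.

Lemma D_step_ext_prefix (M : Structure L) k (f g : nat -> dom M) :
  (forall i, i <= k -> f i = g i) -> D_step Phi M f k -> D_step Phi M g k.
Proof.
  intros H Hf c; rewrite <- !(@sat_Phi_ext_prefix M k f g) by (intros; apply H; lia).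
  rewrite <- H by lia; apply Hf.
Qed.

(* Richness makes realisations of [D_Phi] existentially closed, and the position of
   the witness depends only on the formula and on the positions of its parameters. *)
Lemma rich_witness_index (p : formula L) (v : nat) (tau : nat -> nat) :
  exists n, forall (M : Structure L) (b : nat -> dom M), realises_D Phi M b ->
    forall e : nat -> dom M, (forall m, occurs_free m p -> m <> v -> e m = b (tau m)) ->
    (exists c, sat M (upd M e v c) p) -> sat M (upd M e v (b n)) p.
Proof.
  set (rho := fun m => if Nat.eqb m v then 0 else S (tau m)).
  assert (Hfv : fv_below (S (max_below tau (formula_bound p))) (rename rho p)).
  { intros m Hm; destruct (occurs_free_rename p m rho Hm) as [m' [H1 <-]]; unfold rho.
    destruct (Nat.eqb m' v); [lia|].
    pose proof (max_below_ge tau (occurs_free_lt_bound _ _ H1)); lia. }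
  destruct (proj2 HPhi _ _ Hfv) as [n [_ Hn]].
  exists n; intros M b Hb e He [c Hc].
  assert (Eq : forall c, sat M (upd M e v c) p <-> sat M (env_xy M b c) (Phi n)).
  { intros c'; rewrite Hn, sat_rename; apply sat_ext_occurs; intros m Hm.
    unfold upd, rho, env_xy; destruct (Nat.eqb_spec m v); auto. }
  apply Eq, (Hb n c), Eq; auto.
Qed.

(* A position [k] whose formula is the trivially true [x_{n+j} = x_{n+j}]: [D_Phi] puts no
   constraint on the [k]-th entry. *)
Definition blank_index (n j : nat) : nat :=
  epsilon (inhabits 0)
    (fun k => n + 1 + j <= k /\ Phi k = fEq (tvar L (n + 1 + j)) (tvar L (n + 1 + j))).

Lemma blank_index_spec n j :
  n + 1 + j <= blank_index n j /\
  Phi (blank_index n j) = fEq (tvar L (n + 1 + j)) (tvar L (n + 1 + j)).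
Proof.
  unfold blank_index; apply epsilon_spec, (proj2 HPhi).
  intros m [Hm|Hm]; simpl in Hm; lia.
Qed.

Lemma blank_index_inj n j j' : blank_index n j = blank_index n j' -> j = j'.
Proof.
  intros E; pose proof (proj2 (blank_index_spec n j)) as A.
  pose proof (proj2 (blank_index_spec n j')) as B.
  rewrite E, B in A; injection A; lia.
Qed.

Section Extension.
Variable M : Structure L.
Variable pool : dom M -> Prop.
Variable en : nat -> dom M.
Variable s : nat -> dom M.
Variable n : nat.

Hypothesis en_pool : forall j, pool (en j).
Hypothesis pool_witness : forall k (f : nat -> dom M), (forall i, i < k -> pool (f i)) ->
  (exists c, sat M (env_xy M f c) (Phi k)) -> exists c, pool c /\ sat M (env_xy M f c) (Phi k).
Hypothesis s_pool : forall i, i < n -> pool (s i).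
Hypothesis s_D : forall k, k < n -> D_step Phi M s k.

(* Past the prefix [s], blank positions enumerate [en] and every other position holds
   a witness in [pool] for its formula whenever one exists. *)
Definition next_entry (k : nat) (g : nat -> dom M) : dom M :=
  if lt_dec k n then s k else
  match excluded_middle_informative (exists j, blank_index n j = k) with
  | left h => en (proj1_sig (constructive_indefinite_description _ h))
  | right _ =>
    match excluded_middle_informative (exists c, pool c /\ sat M (env_xy M g c) (Phi k)) with
    | left h => proj1_sig (constructive_indefinite_description _ h)
    | right _ => en 0
    end
  end.

Fixpoint stage (k : nat) : nat -> dom M :=
  match k with
  | O => fun _ => en 0
  | S k' => fun i => if Nat.eq_dec i k' then next_entry k' (stage k') else stage k' i
  end.

Definition extension (i : nat) : dom M := stage (S i) i.

Lemma stage_extension i k : i < k -> stage k i = extension i.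
Proof.
  induction k as [|k IH]; intros H; [lia|]; unfold extension; simpl.
  destruct (Nat.eq_dec i k) as [->|Hik]; [destruct (Nat.eq_dec k k); congruence|].
  rewrite IH by lia; unfold extension; simpl; destruct (Nat.eq_dec i i); congruence.
Qed.

Lemma extension_next i : extension i = next_entry i (stage i).
Proof. unfold extension; simpl; destruct (Nat.eq_dec i i); congruence. Qed.

Lemma stage_pool k i : pool (stage k i).
Proof.
  revert i; induction k as [|k IH]; intros i; simpl; auto.
  destruct (Nat.eq_dec i k); auto; unfold next_entry.
  destruct (lt_dec k n); auto.
  destruct excluded_middle_informative; auto.
  destruct excluded_middle_informative as [h|h]; auto.
  exact (proj1 (proj2_sig (constructive_indefinite_description _ h))).
Qed.

Lemma extension_prefix i : i < n -> extension i = s i.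
Proof. intros Hi; rewrite extension_next; unfold next_entry; destruct (lt_dec i n); [auto | lia]. Qed.

Lemma extension_blank j : extension (blank_index n j) = en j.
Proof.
  rewrite extension_next; unfold next_entry; pose proof (proj1 (blank_index_spec n j)).
  destruct (lt_dec (blank_index n j) n); [lia|].
  destruct excluded_middle_informative as [h|h]; [|exfalso; eauto].
  f_equal; apply (blank_index_inj n), (proj2_sig (constructive_indefinite_description _ h)).
Qed.

Lemma extension_realises : realises_D Phi M extension.
Proof.
  intros k c.
  rewrite !(@sat_Phi_ext_prefix M k extension (stage k)) by (intros; symmetry; apply stage_extension; auto).
  intros Hc; rewrite extension_next; unfold next_entry; destruct (lt_dec k n) as [Hk|Hk].
  - assert (Hks : forall i, i < k -> stage k i = s i)
      by (intros; rewrite stage_extension, extension_prefix; auto; lia).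
    rewrite !(@sat_Phi_ext_prefix M k (stage k) s _ Hks) in *; apply (s_D Hk c Hc).
  - destruct excluded_middle_informative as [[j <-]|Hj].
    + rewrite (proj2 (blank_index_spec n j)); simpl; auto.
    + destruct excluded_middle_informative as [h|h].
      * exact (proj2 (proj2_sig (constructive_indefinite_description _ h))).
      * exfalso; apply h, pool_witness; [intros; apply stage_pool | eauto].
Qed.

End Extension.

Lemma extend_realisation (M : Structure L) (pool : dom M -> Prop) (en s : nat -> dom M) n :
  (forall j, pool (en j)) ->
  (forall k (f : nat -> dom M), (forall i, i < k -> pool (f i)) ->
    (exists c, sat M (env_xy M f c) (Phi k)) -> exists c, pool c /\ sat M (env_xy M f c) (Phi k)) ->
  (forall i, i < n -> pool (s i)) -> (forall k, k < n -> D_step Phi M s k) ->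
  exists a, (forall i, i < n -> a i = s i) /\ realises_D Phi M a /\ (forall i, pool (a i)) /\
    (forall j, exists i, a i = en j).
Proof.
  intros Hen HS Hs HD; exists (@extension M pool en s n); split; [|split; [|split]].
  - apply extension_prefix.
  - apply extension_realises; auto.
  - intros i; unfold extension; apply stage_pool; auto.
  - intros j; exists (blank_index n j); apply extension_blank.
Qed.

Lemma extend_realisation_within (M : Structure L) (b s : nat -> dom M) n :
  realises_D Phi M b -> (forall i, i < n -> exists j, s i = b j) ->
  (forall k, k < n -> D_step Phi M s k) ->
  exists a, (forall i, i < n -> a i = s i) /\ realises_D Phi M a /\ same_entries M a b.
Proof.
  intros Hb Hs HD.
  destruct (@extend_realisation M (fun x => exists j, x = b j) b s n) as [a [H1 [H2 [H3 H4]]]];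
    eauto.
  - intros k f Hf [c Hc].
    set (tau := fun m => match m with O => O | S i => epsilon (inhabits 0) (fun j => f i = b j) end).
    destruct (rich_witness_index (Phi k) 0 tau) as [w Hw].
    assert (E : forall c', env_xy M f c' = upd M (env_xy M f c) 0 c')
      by (intros c'; apply functional_extensionality; intros []; reflexivity).
    exists (b w); split; eauto; rewrite E; apply (Hw M b Hb); [|exists c; rewrite <- E; auto].
    intros [|m] Hm Hm0; [congruence|]; simpl.
    apply (epsilon_spec (inhabits 0) (fun j => f m = b j)), Hf.
    apply (proj1 HPhi k) in Hm; lia.
  - exists a; split; auto; split; auto; split.
    + intros i; destruct (H3 i) as [j Hj]; eauto.
    + intros j; destruct (H4 j) as [i Hi]; eauto.
Qed.

Lemma realisation_exists (M : Structure L) : exists a, realises_D Phi M a.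
Proof.
  destruct (dom_inhabited M) as [d].
  destruct (@extend_realisation M (fun _ => True) (fun _ => d) (fun _ => d) 0)
    as [a [_ [Ha _]]]; [auto | intros k f _ [c Hc]; eauto | intros; lia | intros; lia | eauto].
Qed.

Lemma realisation_other_entry (M : Structure L) a :
  realises_D Phi M a -> (exists u v : dom M, u <> v) -> exists n, a n <> a 0.
Proof.
  intros Ha [u [v Huv]].
  destruct (rich_witness_index (fNot (fEq (tvar L 0) (tvar L 1))) 0 (fun m => m - 1)) as [n Hn].
  exists n; apply (Hn M a Ha (fun _ => a 0)).
  - intros [|[|m]] [Hm|Hm] Hm0; simpl in *; congruence.
  - destruct (classic (u = a 0)) as [->|h]; [exists v | exists u]; cbn; unfold upd; simpl; auto.
Qed.

Lemma realisation_set_entry (M : Structure L) a n d :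
  realises_D Phi M a -> (forall env, sat M env (Phi n)) -> (exists j, d = a j) ->
  exists a', realises_D Phi M a' /\ a' n = d /\ forall i, i < n -> a' i = a i.
Proof.
  intros Ha Hn [j ->].
  set (s := fun i => if Nat.eqb i n then a j else a i).
  assert (Hs : forall i, i < n -> s i = a i)
    by (intros i Hi; unfold s; destruct (Nat.eqb_spec i n); auto; lia).
  destruct (@extend_realisation_within M a s (S n) Ha) as [a' [Hpre [Ha' _]]].
  - intros i _; unfold s; destruct (Nat.eqb i n); eauto.
  - intros k Hk c Hc; destruct (Nat.eq_dec k n) as [->|Hkn]; [apply Hn|].
    revert c Hc; apply (D_step_ext_prefix (f := a)); [intros; symmetry; apply Hs; lia | exact (Ha k)].
  - exists a'; split; auto; split; [rewrite Hpre by lia; unfold s; rewrite Nat.eqb_refl; auto|].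
    intros i Hi; rewrite Hpre, Hs; auto.
Qed.

End Rich.

(** * Limit models *)

(* A Łoś theorem without ultrafilters: along a sequence of realisations whose types
   converge, truth is decided eventually, so the Fréchet filter already behaves like an
   ultrafilter; witnesses are taken among the entries of [a k], at positions that do not
   depend on [k] by [rich_witness_index]. *)
Section LimitModel.
Variable L : Language.
Variable Phi : seq_formulas L.
Hypothesis HPhi : rich Phi.
Variable T : theory L.
Variable Ms : nat -> Structure L.
Variables a b : forall k, nat -> dom (Ms k).
Hypothesis Ms_model : forall k, is_model T (Ms k).
Hypothesis a_realises : forall k, realises_D Phi (Ms k) (a k).
Hypothesis b_entries : forall j, exists i, eventually (fun k => b k j = a k i).

Definition env_seq (k : nat) : nat -> dom (Ms k) := pair_env (Ms k) (a k) (b k).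

Definition renamed_env (sigma : nat -> nat) (k : nat) : nat -> dom (Ms k) :=
  fun m => env_seq k (sigma m).

Hypothesis converges : forall phi,
  eventually (fun k => sat (Ms k) (env_seq k) phi) \/
  eventually (fun k => ~ sat (Ms k) (env_seq k) phi).

Lemma converges_renamed sigma phi :
  eventually (fun k => sat (Ms k) (renamed_env sigma k) phi) \/
  eventually (fun k => ~ sat (Ms k) (renamed_env sigma k) phi).
Proof.
  destruct (converges (rename sigma phi)) as [H|H]; [left|right]; revert H;
    apply eventually_mono; intros k; rewrite sat_rename; auto.
Qed.

Lemma env_seq_entry m : exists i, eventually (fun k => env_seq k m = a k i).
Proof.
  unfold env_seq; revert m; apply var_ind; intros i.
  - exists i; apply always_eventually; intros k; apply pair_env_x.
  - destruct (b_entries i) as [i' Hi']; exists i'; revert Hi'; apply eventually_mono.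
    intros k; rewrite pair_env_y; auto.
Qed.

Lemma witness_index phi v sigma :
  eventually (fun k => exists c, sat (Ms k) (upd (Ms k) (renamed_env sigma k) v c) phi) ->
  exists j, eventually (fun k => sat (Ms k) (renamed_env (upd_nat sigma v j) k) phi).
Proof.
  intros Hc.
  destruct (choice (fun m i => eventually (fun k => env_seq k (sigma m) = a k i))
    (fun m => env_seq_entry (sigma m))) as [tau Htau].
  destruct (rich_witness_index HPhi phi v tau) as [n Hn]; exists (xvar n).
  generalize (eventually_and Hc (@eventually_forall_lt (formula_bound phi) _ (fun m _ => Htau m))).
  apply eventually_mono; intros k [Hk1 Hk2].
  rewrite (sat_ext _ _ _ (upd (Ms k) (renamed_env sigma k) v (a k n))).
  - apply (Hn (Ms k) (a k) (a_realises k)); auto.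
    intros m Hm _; apply Hk2, occurs_free_lt_bound; auto.
  - intros m; unfold renamed_env, env_seq, upd_nat, upd; destruct (Nat.eqb m v); auto; apply pair_env_x.
Qed.

Definition limit_eq (i j : nat) : Prop :=
  eventually (fun k => env_seq k i = env_seq k j).

Lemma limit_eq_refl i : limit_eq i i.
Proof. apply always_eventually; auto. Qed.

Lemma limit_eq_sym i j : limit_eq i j -> limit_eq j i.
Proof. apply eventually_mono; auto. Qed.

Lemma limit_eq_trans i j l : limit_eq i j -> limit_eq j l -> limit_eq i l.
Proof. intros H1 H2; generalize (eventually_and H1 H2); apply eventually_mono; intros k [-> ->]; auto. Qed.

Definition limit_dom : Type := {C : nat -> Prop | exists i, C = limit_eq i}.

Definition cls (i : nat) : limit_dom := exist _ (limit_eq i) (ex_intro _ i eq_refl).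

Definition rep (C : limit_dom) : nat := epsilon (inhabits 0) (fun i => proj1_sig C = limit_eq i).

Lemma rep_spec C : proj1_sig C = limit_eq (rep C).
Proof. unfold rep; apply epsilon_spec, (proj2_sig C). Qed.

Lemma cls_rep C : cls (rep C) = C.
Proof.
  pose proof (rep_spec C) as E; destruct C as [P HP]; simpl in E.
  apply subset_eq_compat; auto.
Qed.

Lemma cls_eq i j : cls i = cls j <-> limit_eq i j.
Proof.
  split.
  - intros E; apply (f_equal (@proj1_sig _ _)) in E; simpl in E; rewrite E; apply limit_eq_refl.
  - intros H; apply subset_eq_compat, functional_extensionality; intros x.
    apply propositional_extensionality; split; intros Hx.
    + apply (limit_eq_trans (limit_eq_sym H) Hx).
    + apply (limit_eq_trans H Hx).
Qed.

Lemma rep_cls i : limit_eq (rep (cls i)) i.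
Proof. pose proof (rep_spec (cls i)) as E; simpl in E; rewrite <- E; apply limit_eq_refl. Qed.

(* The value of [f] is the witness for [y] in [y = f(x_1, ..., x_r)], with [x_(i+1)] read at
   position [g i]. *)
Lemma fun_index_exists f (g : Fin.t (farity L f) -> nat) :
  exists j, eventually (fun k => env_seq k j = fint (Ms k) f (fun x => env_seq k (g x))).
Proof.
  set (phi := fEq (tvar L 0) (tapp f (fun x => tvar L (S (proj1_sig (Fin.to_nat x)))))).
  set (sigma := fun m => match m with O => O | S m' =>
    match lt_dec m' (farity L f) with left h => g (Fin.of_nat_lt h) | right _ => O end end).
  assert (Hs : forall k x, renamed_env sigma k (S (proj1_sig (Fin.to_nat x))) = env_seq k (g x)).
  { intros k x; unfold renamed_env, sigma; destruct (lt_dec _ _) as [h|h].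
    - rewrite (proof_irrelevance _ h (proj2_sig (Fin.to_nat x))), Fin.of_nat_to_nat_inv; auto.
    - exfalso; apply h, (proj2_sig (Fin.to_nat x)). }
  destruct (@witness_index phi 0 sigma) as [j Hj].
  - apply always_eventually; intros k; exists (fint (Ms k) f (fun x => env_seq k (g x))).
    unfold phi; cbn [sat eval]; unfold upd at 1; rewrite Nat.eqb_refl; f_equal.
    apply functional_extensionality; intros x; unfold upd; simpl; symmetry; apply Hs.
  - exists j; revert Hj; apply eventually_mono; intros k Hk; unfold phi in Hk; cbn [sat eval] in Hk.
    change (env_seq k j) with (renamed_env (upd_nat sigma 0 j) k 0); rewrite Hk; f_equal.
    apply functional_extensionality; intros x; rewrite <- (Hs k x); reflexivity.
Qed.

Definition fun_index f (g : Fin.t (farity L f) -> nat) : nat :=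
  epsilon (inhabits 0)
    (fun j => eventually (fun k => env_seq k j = fint (Ms k) f (fun x => env_seq k (g x)))).

Lemma fun_index_spec f g :
  eventually (fun k => env_seq k (fun_index f g) = fint (Ms k) f (fun x => env_seq k (g x))).
Proof. unfold fun_index; apply epsilon_spec, fun_index_exists. Qed.

Definition limit_structure : Structure L :=
  {| dom := limit_dom;
     dom_inhabited := inhabits (cls 0);
     fint := fun f args => cls (fun_index f (fun x => rep (args x)));
     rint := fun r args =>
       eventually (fun k => rint (Ms k) r (fun x => env_seq k (rep (args x)))) |}.

Notation LM := limit_structure.

Lemma rep_cls_fin r (J : Fin.t r -> nat) :
  eventually (fun k => forall x, env_seq k (rep (cls (J x))) = env_seq k (J x)).
Proof. apply eventually_forall_fin; intros x; apply rep_cls. Qed.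

Lemma eval_limit t : forall sigma, exists j,
  eval LM (fun m => cls (sigma m)) t = cls j /\
  eventually (fun k => env_seq k j = eval (Ms k) (renamed_env sigma k) t).
Proof.
  induction t as [n|f args IH]; intros sigma.
  - exists (sigma n); split; auto; apply always_eventually; reflexivity.
  - destruct (choice (fun x j => eval LM (fun m => cls (sigma m)) (args x) = cls j /\
      eventually (fun k => env_seq k j = eval (Ms k) (renamed_env sigma k) (args x))))
      as [J HJ]; [intros x; apply IH|].
    exists (fun_index f (fun x => rep (cls (J x)))); split.
    + simpl; do 2 f_equal; apply functional_extensionality; intros x; rewrite (proj1 (HJ x)); auto.
    + generalize (eventually_and (fun_index_spec f (fun x => rep (cls (J x))))
        (eventually_and (rep_cls_fin J)
        (eventually_forall_fin _ (fun x => proj2 (HJ x))))).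
      apply eventually_mono; intros k [-> [H2 H3]]; simpl; f_equal.
      apply functional_extensionality; intros x; rewrite H2; auto.
Qed.

Definition limit_truth (phi : formula L) : Prop := forall sigma,
  sat LM (fun m => cls (sigma m)) phi <-> eventually (fun k => sat (Ms k) (renamed_env sigma k) phi).

Lemma limit_truth_rel r (ts : Fin.t (rarity L r) -> term L) : limit_truth (fRel r ts).
Proof.
  intros sigma.
  destruct (choice (fun x j => eval LM (fun m => cls (sigma m)) (ts x) = cls j /\
    eventually (fun k => env_seq k j = eval (Ms k) (renamed_env sigma k) (ts x))))
    as [J HJ]; [intros x; apply eval_limit|]; simpl.
  assert (H : eventually (fun k =>
    (fun x => env_seq k (rep (eval LM (fun m => cls (sigma m)) (ts x))))
    = (fun i => eval (Ms k) (renamed_env sigma k) (ts i)))).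
  { generalize (eventually_and (rep_cls_fin J) (eventually_forall_fin _ (fun x => proj2 (HJ x)))).
    apply eventually_mono; intros k [H1 H2]; apply functional_extensionality; intros x.
    rewrite (proj1 (HJ x)), H1; auto. }
  split; intros H'; generalize (eventually_and H' H); apply eventually_mono;
    intros k [H1 H2]; [rewrite <- H2 | rewrite H2]; auto.
Qed.

Lemma upd_cls sigma n j m :
  upd LM (fun m => cls (sigma m)) n (cls j) m = cls (upd_nat sigma n j m).
Proof. unfold upd, upd_nat; destruct (Nat.eqb m n); auto. Qed.

Lemma upd_renamed_env sigma n j k m :
  renamed_env (upd_nat sigma n j) k m = upd (Ms k) (renamed_env sigma k) n (env_seq k j) m.
Proof. unfold renamed_env, upd, upd_nat; destruct (Nat.eqb m n); auto. Qed.

Lemma limit_truth_eq t u : limit_truth (fEq t u).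
Proof.
  intros sigma; destruct (eval_limit t sigma) as [j1 [E1 H1]], (eval_limit u sigma) as [j2 [E2 H2]].
  simpl; rewrite E1, E2, cls_eq; unfold limit_eq.
  split; intros H; generalize (eventually_and H (eventually_and H1 H2));
    apply eventually_mono; intros k [A [B C]]; congruence.
Qed.

Lemma limit_truth_ex n phi : limit_truth phi -> limit_truth (fEx n phi).
Proof.
  unfold limit_truth; intros IH sigma; simpl; split.
  - intros [C HC]; rewrite <- (cls_rep C), (sat_ext _ _ _ _ (upd_cls sigma n (rep C))), IH in HC.
    revert HC; apply eventually_mono; intros k Hk; exists (env_seq k (rep C)).
    rewrite <- (sat_ext _ _ _ _ (upd_renamed_env sigma n (rep C) k)); auto.
  - intros H; destruct (witness_index _ _ _ H) as [j Hj]; exists (cls j).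
    rewrite (sat_ext _ _ _ _ (upd_cls sigma n j)), IH; auto.
Qed.

Lemma limit_truth_all n phi : limit_truth phi -> limit_truth (fAll n phi).
Proof.
  unfold limit_truth; intros IH sigma; simpl; split.
  - intros H; destruct (converges_renamed sigma (fAll n phi)) as [H1|H1]; [exact H1|].
    exfalso; destruct (@witness_index (fNot phi) n sigma) as [j Hj].
    { revert H1; apply eventually_mono; intros k Hk; apply not_all_ex_not in Hk; exact Hk. }
    specialize (H (cls j)); rewrite (sat_ext _ _ _ _ (upd_cls sigma n j)), IH in H.
    apply eventually_False; generalize (eventually_and H Hj); apply eventually_mono; simpl; tauto.
  - intros H C; rewrite <- (cls_rep C), (sat_ext _ _ _ _ (upd_cls sigma n (rep C))), IH.
    revert H; apply eventually_mono; intros k Hk.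
    rewrite (sat_ext _ _ _ _ (upd_renamed_env sigma n (rep C) k)); auto.
Qed.

Lemma sat_limit phi : limit_truth phi.
Proof.
  induction phi; unfold limit_truth in *; intros sigma.
  - simpl; split; [tauto | apply eventually_False].
  - apply limit_truth_eq.
  - apply limit_truth_rel.
  - simpl; rewrite IHphi; split; [|apply eventually_not].
    intros H; destruct (converges_renamed sigma phi); tauto.
  - simpl; rewrite IHphi1, IHphi2; split.
    + intros [H1 H2]; apply eventually_and; auto.
    + intros H; split; revert H; apply eventually_mono; tauto.
  - simpl; rewrite IHphi1, IHphi2; split.
    + intros [H|H]; revert H; apply eventually_mono; tauto.
    + intros H; destruct (converges_renamed sigma phi1) as [H1|H1]; [auto|].
      destruct (converges_renamed sigma phi2) as [H2|H2]; [auto|].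
      exfalso; apply eventually_False; generalize (eventually_and H (eventually_and H1 H2)).
      apply eventually_mono; tauto.
  - simpl; rewrite IHphi1, IHphi2; split.
    + intros H; destruct (converges_renamed sigma phi1) as [H1|H1].
      * generalize (H H1); apply eventually_mono; tauto.
      * revert H1; apply eventually_mono; tauto.
    + intros H H1; generalize (eventually_and H H1); apply eventually_mono; tauto.
  - apply limit_truth_ex; auto.
  - apply limit_truth_all; auto.
Qed.

Lemma limit_structure_model : is_model T LM.
Proof.
  intros phi Hphi env.
  rewrite (sat_ext _ phi env (fun m => cls (rep (env m)))) by (intros; rewrite cls_rep; auto).
  apply sat_limit, always_eventually; intros k; apply Ms_model; auto.
Qed.

End LimitModel.

Definition type_limit (L : Language) (u : nat -> ptype L) : ptype L :=
  fun phi => eventually (fun k => u k phi).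

Lemma type_limit_model (L : Language) (Phi : seq_formulas L) (T : theory L) (u : nat -> ptype L) :
  rich Phi ->
  (forall k, exists M, is_model T M /\ exists a b, realises_D Phi M a /\ u k = tp2 M a b) ->
  (forall j, exists i, eventually (fun k => u k (entry_eq L i j))) ->
  (forall phi, eventually (fun k => u k phi) \/ eventually (fun k => ~ u k phi)) ->
  model_type T (type_limit u).
Proof.
  intros HPhi Hu Hentries Hconv.
  destruct (choice (fun k (x : {M : Structure L & ((nat -> dom M) * (nat -> dom M))%type}) =>
    is_model T (projT1 x) /\ realises_D Phi (projT1 x) (fst (projT2 x)) /\
    u k = tp2 (projT1 x) (fst (projT2 x)) (snd (projT2 x)))) as [f Hf].
  { intros k; destruct (Hu k) as [M [HM [a [b [Ha E]]]]]; exists (existT _ M (a, b)); auto. }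
  set (Ms := fun k => projT1 (f k)).
  set (a := fun k => fst (projT2 (f k))); set (b := fun k => snd (projT2 (f k))).
  assert (Hub : forall k phi, u k phi <-> sat (Ms k) (env_seq Ms a b k) phi).
  { intros k phi; destruct (Hf k) as [_ [_ ->]]; reflexivity. }
  assert (Hb : forall j, exists i, eventually (fun k => b k j = a k i)).
  { intros j; destruct (Hentries j) as [i Hi]; exists i; revert Hi; apply eventually_mono.
    intros k; destruct (Hf k) as [_ [_ ->]]; rewrite tp2_entry_eq; auto. }
  assert (Hconv' : forall phi, eventually (fun k => sat (Ms k) (env_seq Ms a b k) phi) \/
                              eventually (fun k => ~ sat (Ms k) (env_seq Ms a b k) phi)).
  { intros phi; destruct (Hconv phi) as [H|H]; [left|right]; revert H;
      apply eventually_mono; intros k; rewrite Hub; auto. }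
  assert (Ha : forall k, realises_D Phi (Ms k) (a k)) by (intros k; apply Hf).
  exists (limit_structure Ms a b); split.
  - apply (limit_structure_model HPhi); auto; intros k; apply Hf.
  - exists (fun i => cls Ms a b (xvar i)), (fun j => cls Ms a b (yvar j)).
    apply ptype_ext; intros phi; unfold type_limit, tp2.
    rewrite (sat_ext (limit_structure Ms a b) _ _ (fun m => cls Ms a b m)),
      (sat_limit HPhi Ms a b Ha Hb Hconv' phi (fun m => m)).
    + split; apply eventually_mono; intros k; rewrite Hub; auto.
    + apply var_ind; intros i; [rewrite pair_env_x | rewrite pair_env_y]; auto.
Qed.

(** * The metric on [G] *)

Lemma half_pow_pos n : (0 < (/2) ^ n)%R.
Proof. apply pow_lt; lra. Qed.

Lemma half_pow_lt m n : n < m -> ((/2) ^ m < (/2) ^ n)%R.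
Proof.
  intros H; rewrite !pow_inv; apply Rinv_lt_contravar.
  - apply Rmult_lt_0_compat; apply pow_lt; lra.
  - apply Rlt_pow; auto; lra.
Qed.

Lemma half_pow_le m n : n <= m -> ((/2) ^ m <= (/2) ^ n)%R.
Proof. intros H; destruct (Nat.eq_dec m n) as [->|]; [lra | left; apply half_pow_lt; lia]. Qed.

Lemma half_pow_small eps : (0 < eps)%R -> exists N, ((/2) ^ N < eps)%R.
Proof.
  intros H; destruct (pow_lt_1_zero (/2) ltac:(rewrite Rabs_right; lra) eps H) as [N HN].
  exists N; specialize (HN N (le_n _)); rewrite Rabs_right in HN; auto; left; apply half_pow_pos.
Qed.

Section LeastFormula.
Variable L : Language.

Definition least_formula (f : nat -> formula L) (j : nat) : formula L :=
  fAnd (f j) (big_and j (fun j' => fNot (f j'))).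

Lemma least_formula_iff p f j : realised p -> (exists j, p (f j)) ->
  (p (least_formula f j) <-> least (fun j => p (f j)) = j).
Proof.
  intros Hp Hex; unfold least_formula; rewrite realised_and, realised_big_and by auto.
  destruct (least_spec _ Hex) as [H1 H2]; split.
  - intros [Hj Hlt]; apply least_unique; auto; intros j' Hj'.
    destruct (le_lt_dec j j') as [|l]; auto; specialize (Hlt j' l).
    rewrite realised_not in Hlt; tauto.
  - intros <-; split; auto; intros j' Hj'; rewrite realised_not by auto; intros C.
    specialize (H2 j' C); lia.
Qed.

Definition literal (p : ptype L) (phi : formula L) : formula L :=
  if excluded_middle_informative (p phi) then phi else fNot phi.

Lemma literal_iff p q phi : realised q -> (q (literal p phi) <-> (q phi <-> p phi)).
Proof.
  intros Hq; unfold literal; destruct excluded_middle_informative; [tauto|].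
  rewrite realised_not; tauto.
Qed.

End LeastFormula.

Section Metric.
Variable L : Language.
Variable Phi : seq_formulas L.
Hypothesis HPhi : rich Phi.
Variable T : theory L.
Variable E : nat -> formula L.
Hypothesis E_onto : forall phi, exists n, E n = phi.

Notation G := (Gset T Phi).

Lemma first_y_formula_iff p i j : G p ->
  (p (least_formula (entry_eq L i) j) <-> first_y p i = j).
Proof.
  intros Hp; apply least_formula_iff; [apply (Gset_realised Hp) | exists (first_y p i)].
  apply (first_y_entry i Hp).
Qed.

Lemma first_x_formula_iff p i j : G p ->
  (p (least_formula (fun i' => entry_eq L i' i) j) <-> first_x p i = j).
Proof.
  intros Hp; apply least_formula_iff; [apply (Gset_realised Hp) | exists (first_x p i)].
  apply (first_x_entry i Hp).
Qed.

(* [G] is only a G_delta in the type space: the metric also compares the positions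
   [first_y], [first_x], which is what makes it complete. *)
Definition agree_at (p q : ptype L) (i : nat) : Prop :=
  (p (E i) <-> q (E i)) /\ first_y p i = first_y q i /\ first_x p i = first_x q i.

Definition agree (p q : ptype L) (N : nat) : Prop := forall i, i < N -> agree_at p q i.

Lemma agree_refl p N : agree p p N.
Proof. intros i _; unfold agree_at; tauto. Qed.

Lemma agree_at_sym p q i : agree_at p q i -> agree_at q p i.
Proof. intros [H1 [H2 H3]]; split; [tauto | auto]. Qed.

Lemma agree_sym p q N : agree p q N -> agree q p N.
Proof. intros H i Hi; apply agree_at_sym; auto. Qed.

Lemma agree_trans p q r N : agree p q N -> agree q r N -> agree p r N.
Proof.
  intros H1 H2 i Hi; destruct (H1 i Hi) as [A1 [B1 C1]], (H2 i Hi) as [A2 [B2 C2]].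
  split; [tauto | split; congruence].
Qed.

Lemma agree_mono p q N N' : N' <= N -> agree p q N -> agree p q N'.
Proof. intros H1 H2 i Hi; apply H2; lia. Qed.

Lemma agree_E p q n N : n < N -> agree p q N -> (p (E n) <-> q (E n)).
Proof. intros H1 H2; apply (H2 n H1). Qed.

Definition agree_formula (p : ptype L) (N : nat) : formula L :=
  big_and N (fun i => fAnd (literal p (E i)) (fAnd
    (least_formula (entry_eq L i) (first_y p i))
    (least_formula (fun i' => entry_eq L i' i) (first_x p i)))).

Lemma agree_formula_iff p q N : G p -> G q -> (q (agree_formula p N) <-> agree p q N).
Proof.
  intros Hp Hq; pose proof (Gset_realised Hq) as Rq.
  unfold agree_formula, agree, agree_at; rewrite realised_big_and by auto.
  split; intros H i Hi; specialize (H i Hi);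
    rewrite !realised_and, literal_iff, first_y_formula_iff, first_x_formula_iff in * by auto;
    destruct H as [H1 [H2 H3]]; split; try tauto; split; auto.
Qed.

Lemma agree_formula_self p N : G p -> p (agree_formula p N).
Proof. intros Hp; apply agree_formula_iff, agree_refl; auto. Qed.

Definition dist (p q : ptype L) : R :=
  if excluded_middle_informative (exists i, ~ agree_at p q i)
  then ((/2) ^ least (fun i => ~ agree_at p q i))%R else 0%R.

Lemma dist_lt_iff p q N : (dist p q < (/2) ^ N)%R <-> agree p q (S N).
Proof.
  unfold dist; destruct excluded_middle_informative as [h|h].
  - destruct (least_spec _ h) as [H1 H2]; split.
    + intros H i Hi; apply NNPP; intros C; specialize (H2 i C).
      pose proof (half_pow_le (m := N) (n := least (fun i => ~ agree_at p q i)) ltac:(lia)); lra.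
    + intros H; apply half_pow_lt; destruct (le_lt_dec (least (fun i => ~ agree_at p q i)) N);
        [exfalso; apply H1, H; lia | auto].
  - split; intros _; [intros i _; apply NNPP; intros C; apply h; eauto | apply half_pow_pos].
Qed.

Lemma dist_nonneg p q : (0 <= dist p q)%R.
Proof. unfold dist; destruct excluded_middle_informative; [left; apply half_pow_pos | lra]. Qed.

Lemma dist_sym p q : dist p q = dist q p.
Proof.
  assert (E1 : (fun i => ~ agree_at p q i) = (fun i => ~ agree_at q p i)).
  { apply functional_extensionality; intros i; apply propositional_extensionality.
    split; intros C D; apply C, agree_at_sym, D. }
  unfold dist; rewrite E1; reflexivity.
Qed.

Lemma dist_eq0 p q : G p -> G q -> (dist p q = 0%R <-> p = q).
Proof.
  intros Hp Hq; unfold dist; destruct excluded_middle_informative as [h|h]; split.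
  - intros H; pose proof (half_pow_pos (least (fun i => ~ agree_at p q i))); lra.
  - intros ->; exfalso; destruct h as [i C]; apply C, agree_refl with (N := S i); lia.
  - intros _; apply ptype_ext; intros phi; destruct (E_onto phi) as [n <-].
    apply NNPP; intros C; apply h; exists n; intros [D _]; auto.
  - auto.
Qed.

Lemma dist_triangle p q r : (dist p r <= dist p q + dist q r)%R.
Proof.
  pose proof (dist_nonneg p q); pose proof (dist_nonneg q r).
  unfold dist at 1; destruct excluded_middle_informative as [h|h]; [|lra].
  set (n := least (fun i => ~ agree_at p r i)).
  assert (Hn : ~ agree p r (S n)) by (intros Ag; apply (least_spec _ h), Ag; lia).
  destruct (classic (agree p q (S n))) as [A1|A1];
    [destruct (classic (agree q r (S n))) as [A2|A2]; [exfalso; eauto using agree_trans|] |];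
    rewrite <- dist_lt_iff in *; lra.
Qed.

Lemma Gspace_open_iff (V : ptype L -> Prop) :
  opn (Gspace T Phi) V <->
  forall x, G x -> V x -> exists eps, (0 < eps)%R /\ forall y, G y -> (dist x y < eps)%R -> V y.
Proof.
  split.
  - intros H x Hx Vx; destruct (H x Hx Vx) as [phi [H1 H2]]; destruct (E_onto phi) as [n <-].
    exists ((/2) ^ n)%R; split; [apply half_pow_pos|]; intros y Hy Hd.
    apply H2, (agree_E (p := x) (N := S n)); auto; apply dist_lt_iff; auto.
  - intros H p Hp Vp; destruct (H p Hp Vp) as [eps [He H2]]; destruct (half_pow_small He) as [N HN].
    exists (agree_formula p (S N)); split; [apply agree_formula_self; auto|]; intros q Hq Hq2.
    assert (Ag : agree p q (S N)) by (apply agree_formula_iff; auto).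
    apply dist_lt_iff in Ag; apply H2; auto; lra.
Qed.

Lemma agree_stabilises (u : nat -> ptype L) :
  (forall N, exists K, forall m n, K <= m -> K <= n -> agree (u m) (u n) N) ->
  forall i, exists K, forall k, K <= k -> agree_at (u k) (u K) i.
Proof.
  intros Hc i; destruct (Hc (S i)) as [K HK]; exists K; intros k Hk.
  apply (HK k K Hk (le_n K)); lia.
Qed.

Lemma type_limit_Gset (u : nat -> ptype L) : (forall k, G (u k)) ->
  (forall i, exists K, forall k, K <= k -> agree_at (u k) (u K) i) -> G (type_limit u).
Proof.
  intros Hu Hst; apply Gset_iff; split; [|split; [|split; [|split]]].
  - apply type_limit_model with (Phi := Phi); auto.
    + intros k; destruct (Hu k) as [M [HM [a [b [Ha [_ [_ ->]]]]]]].
      exists M; split; auto; exists a, b; auto.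
    + intros j; destruct (Hst j) as [K HK]; exists (first_x (u K) j); exists K; intros k Hk.
      destruct (HK k Hk) as [_ [_ <-]]; apply (first_x_entry j (Hu k)).
    + intros phi; destruct (E_onto phi) as [n <-], (Hst n) as [K HK].
      destruct (classic (u K (E n))); [left|right]; exists K; intros k Hk;
        destruct (HK k Hk) as [H1 _]; tauto.
  - intros k0; apply always_eventually; intros k; apply (Gset_iff Phi T (u k)), Hu.
  - intros k0; apply always_eventually; intros k; apply (Gset_iff Phi T (u k)), Hu.
  - intros i; destruct (Hst i) as [K HK]; exists (first_y (u K) i), K; intros k Hk.
    destruct (HK k Hk) as [_ [<- _]]; apply (first_y_entry i (Hu k)).
  - intros j; destruct (Hst j) as [K HK]; exists (first_x (u K) j), K; intros k Hk.
    destruct (HK k Hk) as [_ [_ <-]]; apply (first_x_entry j (Hu k)).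
Qed.

Lemma Gset_complete (u : nat -> ptype L) : (forall n, G (u n)) ->
  (forall eps, (0 < eps)%R -> exists N, forall m n, N <= m -> N <= n -> (dist (u m) (u n) < eps)%R) ->
  exists l, G l /\ forall eps, (0 < eps)%R -> exists N, forall n, N <= n -> (dist (u n) l < eps)%R.
Proof.
  intros Hu Hc.
  assert (Hagree : forall N, exists K, forall m n, K <= m -> K <= n -> agree (u m) (u n) (S N)).
  { intros N; destruct (Hc _ (half_pow_pos N)) as [K HK]; exists K; intros; apply dist_lt_iff; auto. }
  assert (Hl : G (type_limit u)).
  { apply type_limit_Gset, agree_stabilises; auto; intros N.
    destruct (Hagree N) as [K HK]; exists K; intros; apply agree_mono with (S N); auto. }
  exists (type_limit u); split; auto; intros eps Heps.
  (* Agreement with [u n] up to [S N] is expressed by a formula, which holds in the limit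
     since it holds eventually. *)
  destruct (half_pow_small Heps) as [N HN], (Hagree N) as [K HK].
  exists K; intros n Hn; apply Rlt_trans with ((/2) ^ N)%R; auto.
  apply dist_lt_iff, agree_formula_iff; auto; exists K; intros k Hk.
  apply agree_formula_iff; auto.
Qed.

Lemma Gset_separable (p0 : ptype L) : G p0 ->
  exists u : nat -> ptype L, forall x, G x -> forall eps, (0 < eps)%R ->
    exists n, G (u n) /\ (dist x (u n) < eps)%R.
Proof.
  intros Hp0.
  exists (fun n => match excluded_middle_informative (exists p, G p /\ p (E n)) with
                   | left h => proj1_sig (constructive_indefinite_description _ h)
                   | right _ => p0 end).
  intros x Hx eps Heps; destruct (half_pow_small Heps) as [N HN].
  destruct (E_onto (agree_formula x (S N))) as [n Hn]; exists n.
  destruct excluded_middle_informative as [h|h].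
  - destruct (proj2_sig (constructive_indefinite_description _ h)) as [H1 H2]; split; auto.
    rewrite Hn, agree_formula_iff, <- dist_lt_iff in H2; auto; lra.
  - exfalso; apply h; exists x; split; auto; rewrite Hn; apply agree_formula_self; auto.
Qed.

Lemma Gspace_polish : (exists p0, G p0) -> polish (Gspace T Phi).
Proof.
  intros [p0 Hp0]; exists dist.
  split; [intros; apply dist_nonneg|]; split; [intros; apply dist_eq0; auto|].
  split; [intros; apply dist_sym|]; split; [intros; apply dist_triangle|].
  split; [intros V; apply Gspace_open_iff|]; split; [apply Gset_complete|].
  destruct (Gset_separable Hp0) as [u Hu]; exists u; intros x Hx eps Heps.
  destruct (Hu x Hx eps Heps) as [n [_ H]]; eauto.
Qed.

End Metric.

(** * The groupoid structure *)

Section Groupoid.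
Variable L : Language.
Variable Phi : seq_formulas L.
Hypothesis HPhi : rich Phi.
Variable T : theory L.
Variable E : nat -> formula L.
Hypothesis E_onto : forall phi, exists n, E n = phi.

Notation G := (Gset T Phi).
Notation agree := (agree E).

Lemma type_rename_continuous (rho : nat -> nat) (S1 S2 : ptype L -> Prop) :
  (forall x, S1 x -> S2 (type_rename rho x)) ->
  continuous_sp (logic_space S1) (logic_space S2) (type_rename rho).
Proof.
  intros H; split; [intros x Hx; apply H; auto|].
  intros V HV x Hx Vx; destruct (HV _ (H x Hx) Vx) as [phi [H1 H2]].
  exists (rename rho phi); split; auto.
Qed.

Lemma type_source_continuous : continuous_sp (Gspace T Phi) (Bspace T Phi) type_source.
Proof. apply type_rename_continuous, Gset_source. Qed.

Lemma type_target_continuous : continuous_sp (Gspace T Phi) (Bspace T Phi) type_target.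
Proof. apply type_rename_continuous, Gset_target. Qed.

Lemma type_inverse_continuous : continuous_sp (Gspace T Phi) (Gspace T Phi) type_inverse.
Proof. apply type_rename_continuous, Gset_inverse. Qed.

(* For [x = tp(a,b)] in a basic open set [phi], we have [a i = b (first_y x i)]; the image
   of [phi] contains every [tp(c,c)] such that [phi] and the first conditions of [D_Phi]
   hold of [(c (first_y x i))_i] and [c], because this prefix extends to a realisation
   with the same entries as [c]. *)
Lemma type_source_open : open_map (Gspace T Phi) (Bspace T Phi) type_source.
Proof.
  intros U HU y Hy [x [Hx [Ux <-]]]; destruct (HU x Hx Ux) as [phi [Hphi HUphi]].
  destruct Hx as [M [HM [a [b [Ha [Hb [[Hab _] Ex]]]]]]].
  set (n := formula_bound phi).
  set (rho := var_pair (fun i => yvar (first_y x i)) yvar).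
  assert (Hrho : forall (M' : Structure L) c,
    type_rename rho (tp2 M' c c) = tp2 M' (fun i => c (first_y x i)) c).
  { intros M' c; unfold rho; rewrite type_rename_tp2.
    destruct (pair_env_xy M' c c) as [_ ->]; f_equal.
    apply functional_extensionality; intros; apply pair_env_y. }
  assert (Ea : (fun i => b (first_y x i)) = a).
  { apply functional_extensionality; intros i; rewrite Ex; symmetry; apply first_y_tp2, Hab. }
  exists (fAnd (rename rho phi) (big_and n (fun k => rename rho (D_formula Phi xvar k)))); split.
  - rewrite Ex, type_source_tp2; split.
    + change (type_rename rho (tp2 M b b) phi); rewrite Hrho, Ea, <- Ex; auto.
    + apply sat_big_and; intros k _; change (type_rename rho (tp2 M b b) (D_formula Phi xvar k)).
      rewrite Hrho, Ea; apply tp2_D_formula_x; exact (Ha k).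
  - intros y' [M' [HM' [c [Hc ->]]]] [H1 H2].
    change (type_rename rho (tp2 M' c c) phi) in H1; rewrite Hrho in H1.
    destruct (extend_realisation_within HPhi (s := fun i => c (first_y x i)) (n := n) Hc)
      as [a' [Hpre [Ha' Hse']]].
    + intros i _; eauto.
    + intros k Hk; apply sat_big_and with (i := k) in H2; auto.
      change (type_rename rho (tp2 M' c c) (D_formula Phi xvar k)) in H2.
      rewrite Hrho in H2; apply tp2_D_formula_x in H2; auto.
    + exists (tp2 M' a' c); split; [apply Gset_tp2; auto|]; split; [|apply type_source_tp2].
      apply HUphi; [apply Gset_tp2; auto|].
      revert H1; apply tp2_ext_prefix; intros i Hi; split; [apply Hpre; exact Hi | auto].
Qed.

Definition composable_pair (z : ptype L * ptype L) : Prop :=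
  G (fst z) /\ G (snd z) /\ type_source (fst z) = type_target (snd z).

Definition agree2 (z w : ptype L * ptype L) (N : nat) : Prop :=
  agree (fst z) (fst w) N /\ agree (snd z) (snd w) N.

Lemma agree2_refl z N : agree2 z z N.
Proof. split; apply agree_refl. Qed.

Lemma agree2_sym z w N : agree2 z w N -> agree2 w z N.
Proof. intros [H1 H2]; split; apply agree_sym; auto. Qed.

Lemma agree2_trans z w v N : agree2 z w N -> agree2 w v N -> agree2 z v N.
Proof. intros [H1 H2] [H3 H4]; split; eapply agree_trans; eauto. Qed.

Lemma agree2_mono z w N N' : N' <= N -> agree2 z w N -> agree2 z w N'.
Proof. intros H [H1 H2]; split; eapply agree_mono; eauto. Qed.

Lemma composable_closed z : G (fst z) -> G (snd z) -> ~ composable_pair z ->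
  exists N, forall w, agree2 z w N -> ~ composable_pair w.
Proof.
  intros Hz1 Hz2 Hc.
  assert (Hphi : exists phi, ~ (type_source (fst z) phi <-> type_target (snd z) phi)).
  { apply NNPP; intros C; apply Hc; repeat split; auto; apply ptype_ext; intros phi.
    apply NNPP; intros D; apply C; eauto. }
  destruct Hphi as [phi Hphi].
  destruct (E_onto (rename (var_pair yvar yvar) phi)) as [n1 Hn1].
  destruct (E_onto (rename (var_pair xvar xvar) phi)) as [n2 Hn2].
  exists (S (n1 + n2)); intros w [A1 A2] [_ [_ Ew]]; apply Hphi.
  pose proof (agree_E (ltac:(lia) : n1 < S (n1 + n2)) A1) as H1.
  pose proof (agree_E (ltac:(lia) : n2 < S (n1 + n2)) A2) as H2.
  assert (Hw : type_source (fst w) phi <-> type_target (snd w) phi) by (rewrite Ew; tauto).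
  unfold type_source, type_target, type_rename in *; rewrite <- Hn1, <- Hn2 in *; tauto.
Qed.

Hypothesis G_nonempty : exists p, G p.

Lemma composable_exists : exists z, composable_pair z.
Proof.
  destruct G_nonempty as [p Hp]; pose proof (Gset_target Hp) as Hb.
  exists (type_target p, type_target p); repeat split; try apply Bset_Gset; auto.
  destruct Hb as [M [_ [a [_ ->]]]]; simpl; rewrite type_source_tp2, type_target_tp2; auto.
Qed.

Definition near_composable (z : ptype L * ptype L) (N : nat) : Prop :=
  exists w, composable_pair w /\ agree2 z w N.

(* The space [composable T Phi s t] has the open sets of [G x G], so continuity of the
   composition is continuity on all of [G x G]: the composition is extended from the
   closed set of composable pairs by a locally constant retraction onto it. *)
Definition retraction_level (z : ptype L * ptype L) : nat :=
  least (fun N => ~ near_composable z (S N)).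

Definition retraction (z : ptype L * ptype L) : ptype L * ptype L :=
  if excluded_middle_informative (composable_pair z) then z
  else epsilon (inhabits z) (fun w => composable_pair w /\ agree2 z w (retraction_level z)).

Lemma near_composable_mono z N N' : N' <= N -> near_composable z N -> near_composable z N'.
Proof. intros H [w [H1 H2]]; exists w; split; auto; eapply agree2_mono; eauto. Qed.

Lemma retraction_level_spec z : G (fst z) -> G (snd z) -> ~ composable_pair z ->
  near_composable z (retraction_level z) /\ ~ near_composable z (S (retraction_level z)) /\
  forall N, near_composable z N -> N <= retraction_level z.
Proof.
  intros Hz1 Hz2 Hc; destruct (composable_closed Hz1 Hz2 Hc) as [N HN].
  assert (Hex : exists N, ~ near_composable z (S N)).
  { exists N; intros [w [H1 H2]]; apply (HN w); auto; eapply agree2_mono; [|exact H2]; lia. }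
  destruct (least_spec _ Hex) as [H1 H2]; fold (retraction_level z) in H1, H2.
  split; [|split; auto].
  - destruct (retraction_level z) as [|l] eqn:El.
    + destruct composable_exists as [w Hw]; exists w; split; auto; split; intros i Hi; lia.
    + apply NNPP; intros C; specialize (H2 l C); lia.
  - intros N' HN'; destruct (le_lt_dec N' (retraction_level z)); auto.
    exfalso; apply H1; eapply near_composable_mono; [|exact HN']; lia.
Qed.

Lemma retraction_spec z : G (fst z) -> G (snd z) ->
  composable_pair (retraction z) /\ agree2 z (retraction z) (retraction_level z).
Proof.
  intros Hz1 Hz2; unfold retraction; destruct excluded_middle_informative as [h|h].
  - split; auto; apply agree2_refl.
  - apply (epsilon_spec (inhabits z) (fun w => composable_pair w /\ agree2 z w (retraction_level z))).
    apply retraction_level_spec; auto.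
Qed.

Lemma retraction_id z : composable_pair z -> retraction z = z.
Proof. intros H; unfold retraction; destruct excluded_middle_informative; tauto. Qed.

Lemma retraction_locally_constant z : G (fst z) -> G (snd z) -> ~ composable_pair z ->
  forall w, agree2 z w (S (retraction_level z)) -> retraction w = retraction z.
Proof.
  intros Hz1 Hz2 Cz w Ag; destruct (retraction_level_spec Hz1 Hz2 Cz) as [H1 [H2 H3]].
  set (l := retraction_level z) in *.
  assert (Cw : ~ composable_pair w) by (intros Cw; apply H2; exists w; split; auto).
  assert (Agw : forall v, agree2 w v l <-> agree2 z v l).
  { assert (Ag' : agree2 z w l) by (apply (agree2_mono (N := S l)); auto).
    intros v; split; intros A; [apply agree2_trans with w | apply agree2_trans with z];
      auto using agree2_sym. }
  assert (Hl : retraction_level w = l).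
  { apply least_unique.
    - intros [v [Cv Av]]; apply H2; exists v; split; auto; eapply agree2_trans; eauto.
    - intros j Hj; destruct (le_lt_dec l j) as [|Hlt]; auto; exfalso; apply Hj.
      destruct H1 as [v [Cv Av]]; exists v; split; auto.
      apply (agree2_mono (N := l)); [lia|]; apply Agw; auto. }
  unfold retraction; destruct (excluded_middle_informative (composable_pair w)); [tauto|].
  destruct (excluded_middle_informative (composable_pair z)); [tauto|].
  rewrite Hl; f_equal; [apply proof_irrelevance|].
  apply functional_extensionality; intros v; apply propositional_extensionality.
  rewrite Agw; tauto.
Qed.

Lemma retraction_continuous z : G (fst z) -> G (snd z) ->
  forall N, exists N', forall w, G (fst w) -> G (snd w) -> agree2 z w N' ->
    agree2 (retraction z) (retraction w) N.
Proof.
  intros Hz1 Hz2 N; destruct (classic (composable_pair z)) as [Cz|Cz].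
  - exists N; intros w Hw1 Hw2 Ag; rewrite (retraction_id Cz).
    destruct (classic (composable_pair w)) as [Cw|Cw]; [rewrite (retraction_id Cw); auto|].
    destruct (retraction_level_spec Hw1 Hw2 Cw) as [_ [_ H3]].
    assert (HN : N <= retraction_level w)
      by (apply H3; exists z; split; auto; apply agree2_sym; auto).
    eapply agree2_trans; [exact Ag|]; eapply agree2_mono; [exact HN | apply retraction_spec; auto].
  - exists (S (retraction_level z)); intros w _ _ Ag.
    rewrite (retraction_locally_constant Hz1 Hz2 Cz Ag); apply agree2_refl.
Qed.

Lemma type_compose_continuous p0 q0 phi : G p0 -> G q0 -> type_compose p0 q0 phi ->
  exists N, forall p q, G p -> G q -> agree p0 p N -> agree q0 q N -> type_compose p q phi.
Proof.
  intros Hp0 Hq0 Hpq.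
  destruct (E_onto (rename (compose_renaming p0 q0) phi)) as [n0 Hn0].
  exists (S (formula_bound phi + n0)); intros p q Hp Hq Ap Aq.
  assert (Hrho : forall m, m < formula_bound phi -> compose_renaming p q m = compose_renaming p0 q0 m).
  { intros m Hm; unfold compose_renaming, var_pair; pose proof (Nat.le_div2_diag_l m).
    destruct (Ap (Nat.div2 m) ltac:(lia)) as [_ [Hy _]], (Aq (Nat.div2 m) ltac:(lia)) as [_ [_ Hx]].
    destruct (Nat.even m); congruence. }
  assert (H1 : type_compose p q phi <-> p (rename (compose_renaming p0 q0) phi)).
  { destruct (Gset_realised Hp) as [M [a [b ->]]]; unfold type_compose, type_rename, tp2.
    rewrite !sat_rename; apply sat_ext_occurs; intros m Hm.
    rewrite Hrho; auto; apply occurs_free_lt_bound; auto. }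
  apply H1; rewrite <- Hn0; apply (agree_E (p := p0)) with (N := S (formula_bound phi + n0));
    [lia | auto | rewrite Hn0; exact Hpq].
Qed.

Definition compose (p q : ptype L) : ptype L :=
  type_compose (fst (retraction (p, q))) (snd (retraction (p, q))).

Lemma compose_tp2 (M : Structure L) a b c : is_model T M -> realises_D Phi M a ->
  realises_D Phi M b -> realises_D Phi M c -> same_entries M a b -> same_entries M b c ->
  compose (tp2 M a b) (tp2 M b c) = tp2 M a c.
Proof.
  intros HM Ha Hb Hc Sab Sbc; unfold compose; rewrite retraction_id.
  - apply type_compose_tp2; [apply Sab|]; intros j; destruct (proj2 Sbc j) as [i Hi]; eauto.
  - repeat split; try apply Gset_tp2; auto; simpl.
    rewrite type_source_tp2, type_target_tp2; auto.
Qed.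

Lemma type_compose_composable p q : composable_pair (p, q) ->
  G (type_compose p q) /\ type_source (type_compose p q) = type_source q /\
  type_target (type_compose p q) = type_target p.
Proof.
  intros [H1 [H2 H3]]; simpl in *.
  destruct (composable_realised H1 H2 H3)
    as [M [HM [a [b [c [Ha [Hb [Hc [Sab [Sbc [-> ->]]]]]]]]]]].
  rewrite type_compose_tp2, !type_source_tp2, !type_target_tp2.
  - split; auto; apply Gset_tp2; eauto using same_entries_trans.
  - apply Sab.
  - intros j; destruct (proj2 Sbc j) as [i Hi]; eauto.
Qed.

Lemma compose_Gset p q : G p -> G q -> G (compose p q).
Proof.
  intros Hp Hq; destruct (retraction_spec (p, q) Hp Hq) as [Cr _].
  unfold compose; destruct (retraction (p, q)); apply type_compose_composable; auto.
Qed.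

Lemma groupoid_spec : groupoid_maps_spec T Phi type_source type_target type_inverse compose.
Proof.
  split.
  - intros M HM a b c Ha Hb Hc Sab Sbc.
    rewrite type_source_tp2, type_target_tp2, type_inverse_tp2, compose_tp2; auto.
  - intros p q Hp Hq E0; apply composable_realised; auto.
Qed.

Lemma groupoid_laws :
  groupoid_axioms (Gset T Phi) (Bset T Phi) type_source type_target type_inverse compose.
Proof.
  split; [apply Bset_Gset|].
  split; [intros e0 [M [HM [a [Ha ->]]]]; rewrite type_source_tp2, type_target_tp2; auto|].
  split; [intros g Hg; split; [apply Gset_source | split; [apply Gset_target | apply Gset_inverse]]; auto|].
  split.
  { intros g h Hg Hh Egh; assert (C : composable_pair (g, h)) by (repeat split; auto).
    unfold compose; rewrite (retraction_id C); apply type_compose_composable, C. }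
  split.
  { intros f g h Hf Hg Hh E1 E2.
    destruct (composable_realised Hf Hg E1)
      as [M [HM [a [b [c [Ha [Hb [Hc [Sab [Sbc [-> ->]]]]]]]]]]].
    rewrite type_source_tp2 in E2.
    destruct (Gset_from_target Hh Hc (eq_sym E2)) as [d [-> [Hd Scd]]].
    rewrite !compose_tp2; eauto using same_entries_trans. }
  split.
  { intros g [M [HM [a [b [Ha [Hb [Sab ->]]]]]]].
    rewrite type_source_tp2, type_target_tp2, !compose_tp2; auto using same_entries_refl. }
  intros g [M [HM [a [b [Ha [Hb [Sab ->]]]]]]].
  rewrite type_inverse_tp2, !type_source_tp2, !type_target_tp2, !compose_tp2;
    auto using same_entries_sym.
Qed.

Lemma compose_continuous : continuous_sp (composable T Phi type_source type_target)
  (Gspace T Phi) (fun z => compose (fst z) (snd z)).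
Proof.
  split; [intros z [[H1 H2] _]; apply compose_Gset; auto|].
  intros V HV x y Hx Hy Vxy.
  destruct (HV _ (compose_Gset Hx Hy) Vxy) as [phi [Hphi HVphi]].
  destruct (retraction_spec (x, y) Hx Hy) as [[Gr1 [Gr2 _]] _].
  destruct (type_compose_continuous _ Gr1 Gr2 Hphi) as [N HN].
  destruct (retraction_continuous (x, y) Hx Hy N) as [N' HN'].
  exists (fun p => p (agree_formula E x N')), (fun q => q (agree_formula E y N')).
  split; [intros p Hp Up; exists (agree_formula E x N'); auto|].
  split; [intros p Hp Up; exists (agree_formula E y N'); auto|].
  split; [exact (agree_formula_self E N' Hx)|]; split; [exact (agree_formula_self E N' Hy)|].
  intros x' y' Hx' Hy' Ux' Uy'.
  apply (agree_formula_iff E N' Hx Hx') in Ux'; apply (agree_formula_iff E N' Hy Hy') in Uy'.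
  destruct (HN' (x', y') Hx' Hy' (conj Ux' Uy')) as [A1 A2].
  destruct (retraction_spec (x', y') Hx' Hy') as [[Gr1' [Gr2' _]] _].
  apply HVphi; [apply compose_Gset; auto|]; apply HN; auto.
Qed.

Theorem Gspace_polish_open_groupoid : polish_open_topological_groupoid T Phi.
Proof.
  exists type_source, type_target, type_inverse, compose.
  split; [apply groupoid_spec|]; split; [apply groupoid_laws|].
  split; [apply compose_continuous|]; split; [apply type_inverse_continuous|].
  split; [apply type_source_continuous|]; split; [apply type_target_continuous|].
  split; [apply type_source_open | apply (Gspace_polish HPhi E E_onto G_nonempty)].
Qed.

End Groupoid.

(** * The base as a Cantor space *)

Section Cantor.
Variable L : Language.
Variable Phi : seq_formulas L.
Hypothesis HPhi : rich Phi.
Variable T : theory L.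
Variable E : nat -> formula L.
Hypothesis E_onto : forall phi, exists n, E n = phi.
Hypothesis T_no_singleton : no_singleton_model T.
Hypothesis B_nonempty : exists p, Bset T Phi p.

Notation B := (Bset T Phi).

Definition B_meets (th : formula L) : Prop := exists p, B p /\ p th.

(* The base has no isolated points: a blank position [n] beyond the variables of [th]
   may hold either [a 0] or an entry different from it. *)
Lemma B_perfect th : B_meets th -> exists chi, B_meets (fAnd th chi) /\ B_meets (fAnd th (fNot chi)).
Proof.
  intros [p [[M [HM [a [Ha ->]]]] Hth]].
  set (N0 := formula_bound th).
  destruct (proj2 HPhi (S N0) (fEq (tvar L (S N0)) (tvar L (S N0)))) as [n [Hn HPn]].
  { intros m [Hm|Hm]; simpl in Hm; lia. }
  assert (Hblank : forall env, sat M env (Phi n)) by (intros; rewrite HPn; reflexivity).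
  destruct (realisation_other_entry HPhi Ha (T_no_singleton HM)) as [n' Hn'].
  assert (Hrealise : forall d, (exists j, d = a j) ->
    exists a', B (tp2 M a' a') /\ tp2 M a' a' th /\ a' n = d /\ a' 0 = a 0).
  { intros d Hd; destruct (realisation_set_entry HPhi n Ha Hblank Hd) as [a' [Ha' [Ha'n Hpre]]].
    exists a'; split; [exists M; split; auto; exists a'; auto|]; split; [|split; auto; apply Hpre; lia].
    revert Hth; apply tp2_ext_prefix; intros i Hi; rewrite Hpre; auto; unfold N0 in *; lia. }
  exists (fEq (tvar L 0) (tvar L (xvar n))); split.
  - destruct (Hrealise (a 0)) as [a' [HB [Hth' [Hn0 H0]]]]; eauto.
    exists (tp2 M a' a'); repeat split; auto; unfold tp2; cbn [sat eval].
    rewrite pair_env_x; unfold pair_env at 1; simpl; congruence.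
  - destruct (Hrealise (a n')) as [a' [HB [Hth' [Hn0 H0]]]]; eauto.
    exists (tp2 M a' a'); repeat split; auto; unfold tp2; cbn [sat eval].
    rewrite pair_env_x; unfold pair_env at 1; simpl; congruence.
Qed.

(* Splitting by [E n] whenever possible makes the cells of length [n+1] decide [E n]. *)
Definition split_formula (th : formula L) (n : nat) : formula L :=
  if excluded_middle_informative (B_meets (fAnd th (E n)) /\ B_meets (fAnd th (fNot (E n))))
  then E n
  else epsilon (inhabits (fFalse L))
         (fun chi => B_meets (fAnd th chi) /\ B_meets (fAnd th (fNot chi))).

Lemma split_formula_spec th n : B_meets th ->
  B_meets (fAnd th (split_formula th n)) /\ B_meets (fAnd th (fNot (split_formula th n))).
Proof.
  intros H; unfold split_formula; destruct excluded_middle_informative as [h|h]; auto.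
  apply (epsilon_spec (inhabits (fFalse L))
    (fun chi => B_meets (fAnd th chi) /\ B_meets (fAnd th (fNot chi)))), B_perfect; auto.
Qed.

(* Addresses list their last bit first. *)
Fixpoint cell (s : list bool) : formula L :=
  match s with
  | nil => fNot (fFalse L)
  | b :: s' =>
      fAnd (cell s') (if b then split_formula (cell s') (length s')
                      else fNot (split_formula (cell s') (length s')))
  end.

Lemma cell_meets s : B_meets (cell s).
Proof.
  induction s as [|b s IH]; simpl.
  - destruct B_nonempty as [p Hp]; exists p; split; auto; apply realised_true, (Bset_realised Hp).
  - destruct (split_formula_spec (length s) IH); destruct b; auto.
Qed.

Lemma cell_cons_iff q b s : B q ->
  (q (cell (b :: s)) <-> q (cell s) /\ (q (split_formula (cell s) (length s)) <-> b = true)).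
Proof.
  intros Hq; pose proof (Bset_realised Hq) as Rq; simpl; destruct b.
  - rewrite realised_and; intuition.
  - rewrite realised_and, realised_not; intuition congruence.
Qed.

Lemma cell_cons_sub {q b s} : B q -> q (cell (b :: s)) -> q (cell s).
Proof. intros Hq H; apply cell_cons_iff in H; tauto. Qed.

Lemma cell_decides s m : m < length s ->
  (forall q, B q -> q (cell s) -> q (E m)) \/ (forall q, B q -> q (cell s) -> ~ q (E m)).
Proof.
  induction s as [|b s IH]; intros Hm; simpl in Hm; [lia|].
  destruct (Nat.eq_dec m (length s)) as [->|Hne].
  2: { destruct (IH ltac:(lia)) as [H|H]; [left|right]; intros q Hq Hth;
         apply H, (cell_cons_sub Hq Hth); auto. }
  destruct (classic (B_meets (fAnd (cell s) (E (length s))) /\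
                     B_meets (fAnd (cell s) (fNot (E (length s)))))) as [h|h].
  - assert (Hsplit : split_formula (cell s) (length s) = E (length s))
      by (unfold split_formula; destruct excluded_middle_informative; tauto).
    destruct b; [left|right]; intros q Hq Hth; apply cell_cons_iff in Hth; auto;
      rewrite Hsplit in Hth; destruct Hth as [_ Hb]; [apply Hb; auto | intros C; discriminate (proj1 Hb C)].
  - apply not_and_or in h; destruct h as [h|h]; [right|left]; intros q Hq Hth;
      apply (cell_cons_sub Hq) in Hth; pose proof (Bset_realised Hq) as Rq.
    + intros C; apply h; exists q; split; auto; apply realised_and; auto.
    + apply NNPP; intros C; apply h; exists q; split; auto.
      apply realised_and; auto; split; auto; apply realised_not; auto.
Qed.

Fixpoint address (q : ptype L) (n : nat) : list bool :=
  match n with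
  | O => nil
  | S n' =>
      (if excluded_middle_informative (q (split_formula (cell (address q n')) n'))
       then true else false) :: address q n'
  end.

Lemma address_length q n : length (address q n) = n.
Proof. induction n; simpl; auto. Qed.

Lemma address_cell q n : B q -> q (cell (address q n)).
Proof.
  intros Hq; pose proof (Bset_realised Hq) as Rq; induction n as [|n IH]; simpl.
  - apply realised_true; auto.
  - rewrite address_length, realised_and by auto.
    destruct excluded_middle_informative; split; auto; apply realised_not; auto.
Qed.

Lemma address_unique {q s} : B q -> q (cell s) -> address q (length s) = s.
Proof.
  intros Hq; induction s as [|b s IH]; intros H; [reflexivity|].
  apply cell_cons_iff in H; auto; destruct H as [H1 H2]; simpl; rewrite (IH H1).
  destruct excluded_middle_informative as [h|h]; f_equal; [symmetry; apply H2; auto|].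
  destruct b; auto; exfalso; apply h, H2; auto.
Qed.

Fixpoint prefix (x : nat -> bool) (n : nat) : list bool :=
  match n with O => nil | S n' => x n' :: prefix x n' end.

Lemma prefix_length x n : length (prefix x n) = n.
Proof. induction n; simpl; auto. Qed.

Lemma prefix_ext {x y n} : (forall i, i < n -> x i = y i) -> prefix x n = prefix y n.
Proof. induction n; simpl; intros H; auto; rewrite H, IHn; auto. Qed.

Lemma prefix_inj {x y n} : prefix x n = prefix y n -> forall i, i < n -> x i = y i.
Proof.
  induction n; simpl; intros H i Hi; [lia|]; injection H as H1 H2.
  destruct (Nat.eq_dec i n) as [->|]; [auto | apply IHn; auto; lia].
Qed.

Lemma cell_prefix_mono q x j k : B q -> j <= k -> q (cell (prefix x k)) -> q (cell (prefix x j)).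
Proof.
  intros Hq Hjk; induction k as [|k IH]; intros H; [replace j with 0 by lia; auto|].
  destruct (Nat.eq_dec j (S k)) as [->|]; auto; apply IH; [lia | apply (cell_cons_sub Hq H)].
Qed.

Definition to_cantor (q : ptype L) (n : nat) : bool := hd false (address q (S n)).

Lemma prefix_to_cantor q n : prefix (to_cantor q) n = address q n.
Proof. induction n; simpl; auto; rewrite IHn; auto. Qed.

Definition cell_point (s : list bool) : ptype L :=
  epsilon (inhabits (fun _ => True)) (fun q => B q /\ q (cell s)).

Lemma cell_point_spec s : B (cell_point s) /\ cell_point s (cell s).
Proof. apply (epsilon_spec (inhabits (fun _ => True)) (fun q => B q /\ q (cell s))), cell_meets. Qed.

(* The points of the cells along the branch [x] converge, by compactness in the form
   of [type_limit_model]. *)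
Definition from_cantor (x : nat -> bool) : ptype L :=
  type_limit (fun n => cell_point (prefix x n)).

Lemma from_cantor_spec x : B (from_cantor x) /\ forall n, from_cantor x (cell (prefix x n)).
Proof.
  set (u := fun n => cell_point (prefix x n)).
  assert (Hu : forall k, B (u k)) by (intros; apply cell_point_spec).
  assert (Hcell : forall n, eventually (fun k => u k (cell (prefix x n)))).
  { intros n; exists n; intros k Hk; apply (cell_prefix_mono x (Hu k) Hk), cell_point_spec. }
  split; [|exact Hcell].
  apply Bset_iff; split; [|split].
  - apply (type_limit_model (Phi := Phi)); auto.
    + intros k; destruct (Hu k) as [M [HM [a [Ha Ek]]]].
      exists M; split; auto; exists a, a; auto.
    + intros j; exists j; apply always_eventually; intros k; apply (Bset_iff Phi T (u k)), Hu.
    + intros phi; destruct (E_onto phi) as [m <-].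
      destruct (@cell_decides (prefix x (S m)) m ltac:(rewrite prefix_length; lia)) as [H|H];
        [left|right]; generalize (Hcell (S m)); apply eventually_mono; intros k; apply H, Hu.
  - intros k0; apply always_eventually; intros k; apply (Bset_iff Phi T (u k)), Hu.
  - intros i; apply always_eventually; intros k; apply (Bset_iff Phi T (u k)), Hu.
Qed.

Lemma from_to_cantor q : B q -> from_cantor (to_cantor q) = q.
Proof.
  intros Hq; destruct (from_cantor_spec (to_cantor q)) as [Hg1 Hg2].
  apply ptype_ext; intros phi; destruct (E_onto phi) as [m <-].
  specialize (Hg2 (S m)); rewrite prefix_to_cantor in Hg2.
  destruct (@cell_decides (address q (S m)) m ltac:(rewrite address_length; lia)) as [H|H].
  - split; intros _; apply H; auto; apply address_cell; auto.
  - split; intros C; exfalso; [apply (H _ Hg1) | apply (H q); auto; apply address_cell]; auto.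
Qed.

Lemma to_from_cantor x : to_cantor (from_cantor x) = x.
Proof.
  apply functional_extensionality; intros n; destruct (from_cantor_spec x) as [Hg1 Hg2].
  pose proof (address_unique Hg1 (Hg2 (S n))) as H.
  rewrite prefix_length in H; unfold to_cantor; rewrite H; reflexivity.
Qed.

Theorem Bspace_cantor : homeomorphic (Bspace T Phi) cantor.
Proof.
  exists to_cantor, from_cantor; split; [|split; [|split]].
  - split; [intros x _; exact I|].
    intros V HV q Hq Vq; destruct (HV _ Vq) as [n Hn].
    exists (cell (address q n)); split; [apply address_cell; auto|].
    intros q' Hq' Hth; apply Hn; intros i Hi; apply (prefix_inj (n := n)); auto.
    rewrite !prefix_to_cantor, <- (address_length q n) at 1; apply address_unique; auto.
  - split; [intros x _; apply from_cantor_spec|].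
    intros V HV x Vx; destruct (from_cantor_spec x) as [Hg1 Hg2].
    destruct (HV _ Hg1 Vx) as [phi [H1 H2]]; destruct (E_onto phi) as [m <-].
    exists (S m); intros y Hy; destruct (from_cantor_spec y) as [Hy1 Hy2]; apply H2; auto.
    specialize (Hy2 (S m)); rewrite (prefix_ext Hy) in Hy2.
    destruct (@cell_decides (prefix x (S m)) m ltac:(rewrite prefix_length; lia)) as [H|H].
    + apply H; auto.
    + exfalso; apply (H _ Hg1); auto.
  - intros q Hq; apply from_to_cantor; auto.
  - intros x _; apply to_from_cantor.
Qed.

End Cantor.

Theorem lemma2p7 (L : Language) (T : theory L) (Phi : seq_formulas L) :
  countable_language L ->
  (forall phi, T phi -> sentence phi) ->
  complete_theory T ->
  no_singleton_model T ->
  rich Phi ->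
  polish_open_topological_groupoid T Phi /\
  homeomorphic (Bspace T Phi) cantor.
Proof.
  (* Completeness of [T] is used only through its consistency. *)
  intros Hcount _ [[M HM] _] Hns HPhi.
  destruct (formula_enumeration Hcount) as [E HE].
  destruct (realisation_exists HPhi M) as [a Ha].
  assert (HB : exists p, Bset T Phi p) by (exists (tp2 M a a), M; eauto).
  split.
  - apply (Gspace_polish_open_groupoid HPhi E HE).
    destruct HB as [p Hp]; exists p; apply Bset_Gset; auto.
  - apply (Bspace_cantor HPhi E HE Hns HB).
Qed.
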